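(* Let $\psi\in C([0,T];\mathbb{R})$ be an admissible curve and let $L:(0,\infty)\to(0,\infty)$ satisfy $\lim_{\sigma_0\to0}L(\sigma_0)=+\infty$. Then $$\lim_{\sigma_0\to0}\ \sup_{t\in[0,T],\ |x|\ge\sigma_0^2L(\sigma_0)+\psi_t}\big|\theta^{\sigma_0}(t,x)-\theta(t,x)\big|=0.$$
   Context: Fix $T>0$, $\kappa\in\mathbb{R}$, $\delta\in(0,T)$. Let $\eta$ solve $\eta_t'=\eta_t^2-2\kappa\eta_t-1$, $\eta_T=1$ on $[0,T]$; set $w_t=\exp(\int_t^T(\eta_s-\kappa)ds)$, $r_t=\int_t^Tw_s^{-2}ds$. Define $g(x)=-x/r_\delta$ if $|x|\le r_\delta$, $g(x)=-\mathrm{sign}(x)$ if $|x|>r_\delta$. For $\sigma_0\in(0,1)$, $\theta^{\sigma_0}$ denotes the unique bounded classical solution (in $C^{1,2}([0,T)\times\mathbb{R})\cap C([0,T]\times\mathbb{R})$) of $$\partial_t\theta-w_t^{-2}\theta\,\partial_x\theta+\tfrac12\sigma_0^2w_t^{-2}\partial^2_{xx}\theta=0\ \text{on }[0,T)\times\mathbb{R},\qquad \theta(T,\cdot)=g.$$ The entropy solution $\theta:[0,T]\times\mathbb{R}\to\mathbb{R}$ is defined by $\theta(t,x)=-\mathrm{sign}(x)$ if $t\le\delta$; $\theta(t,x)=-\mathrm{sign}(x)$ if $t\ge\delta$ and $|x|\ge r_\delta-r_t$; $\theta(t,x)=-x/(r_\delta-r_t)$ if $t>\delta$ and $|x|<r_\delta-r_t$.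 A curve $\psi\in C([0,T];\mathbb{R})$ is called admissible if it is non-negative, non-decreasing, and there is $a<\delta$ such that $\psi_t>(r_\delta-r_t)_+$ for all $t\in(a,T]$. *)

From Stdlib Require Import Reals Lra Classical ClassicalEpsilon.
Open Scope R_scope.

(* Riemann integral int_a^b f, total: value of RiemannInt when f is
   Riemann integrable on [a,b] (independent of the proof), 0 otherwise. *)
Definition RInt (f : R -> R) (a b : R) : R :=
  match excluded_middle_informative
          (exists v : R, exists pr : Riemann_integrable f a b, RiemannInt pr = v) with
  | left H => proj1_sig (constructive_indefinite_description _ H)
  | right _ => 0
  end.

Definition cont_on_interval (f : R -> R) (a b : R) : Prop :=
  forall t, a <= t <= b -> forall eps, 0 < eps -> exists d, 0 < d /\
    forall s, a <= s <= b -> Rabs (s - t) < d -> Rabs (f s - f t) < eps.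

Definition cont_on2 (f : R -> R -> R) (S : R -> R -> Prop) : Prop :=
  forall t x, S t x -> forall eps, 0 < eps -> exists d, 0 < d /\
    forall t' x', S t' x' -> Rabs (t' - t) < d -> Rabs (x' - x) < d ->
      Rabs (f t' x' - f t x) < eps.

Definition is_eta (T kappa : R) (eta : R -> R) : Prop :=
  cont_on_interval eta 0 T /\
  (forall t, 0 < t < T ->
     derivable_pt_lim eta t (eta t ^ 2 - 2 * kappa * eta t - 1)) /\
  eta T = 1.

Definition w_fun (T kappa : R) (eta : R -> R) (t : R) : R :=
  exp (RInt (fun s => eta s - kappa) t T).

Definition r_fun (T kappa : R) (eta : R -> R) (t : R) : R :=
  RInt (fun s => / (w_fun T kappa eta s) ^ 2) t T.

Definition g_fun (T kappa delta : R) (eta : R -> R) (x : R) : R :=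
  let rd := r_fun T kappa eta delta in
  if Rle_dec (Rabs x) rd then - x / rd
  else (if Rlt_dec 0 x then -1 else 1).

Definition msign (x : R) : R :=
  if Rlt_dec 0 x then -1 else if Rlt_dec x 0 then 1 else 0.

Definition theta_entropy (T kappa delta : R) (eta : R -> R) (t x : R) : R :=
  let r := r_fun T kappa eta in
  if Rle_dec t delta then msign x
  else if Rle_dec (r delta - r t) (Rabs x) then msign x
  else - x / (r delta - r t).

Definition is_bounded_classical_solution (T kappa delta : R) (eta : R -> R)
    (s0 : R) (th : R -> R -> R) : Prop :=
  let w := w_fun T kappa eta in
  (exists M, forall t x, 0 <= t <= T -> Rabs (th t x) <= M) /\
  cont_on2 th (fun t _ => 0 <= t <= T) /\
  (exists dt dx dxx : R -> R -> R,
     cont_on2 dt (fun t _ => 0 <= t < T) /\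
     cont_on2 dx (fun t _ => 0 <= t < T) /\
     cont_on2 dxx (fun t _ => 0 <= t < T) /\
     (forall t x, 0 < t < T -> derivable_pt_lim (fun s => th s x) t (dt t x)) /\
     (forall t x, 0 <= t < T -> derivable_pt_lim (fun y => th t y) x (dx t x)) /\
     (forall t x, 0 <= t < T -> derivable_pt_lim (fun y => dx t y) x (dxx t x)) /\
     (forall t x, 0 <= t < T ->
        dt t x - / (w t) ^ 2 * th t x * dx t x
          + / 2 * s0 ^ 2 * / (w t) ^ 2 * dxx t x = 0)) /\
  (forall x, th T x = g_fun T kappa delta eta x).

Definition admissible (T kappa delta : R) (eta : R -> R) (psi : R -> R) : Prop :=
  let r := r_fun T kappa eta in
  cont_on_interval psi 0 T /\
  (forall t, 0 <= t <= T -> 0 <= psi t) /\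
  (forall s t, 0 <= s <= t -> t <= T -> psi s <= psi t) /\
  (exists a, a < delta /\
     forall t, 0 <= t -> a < t <= T -> psi t > Rmax (r delta - r t) 0).

(** With [nu = sigma0^2 / 2] and [a = w^-2], [theta^sigma0] solves
    [th_t - a th th_x + nu a th_xx = 0], a viscous Burgers equation in the time
    variable [r_t]. A maximum principle for backward parabolic inequalities,
    with a quadratic penalty at infinity, gives comparison with supersolutions
    and, applied to the antiderivative of the difference of two solutions,
    uniqueness; hence [theta^sigma0] is odd, vanishes at [x = 0] and is bounded
    by [1]. On [x >= 0] it is compared with a Hopf-Cole barrier built from
    finitely many affine solutions of the inviscid Hamilton-Jacobi equation,
    with slopes [+- j / n] sampling the rarefaction fan. To the right of
    [psi_t + sigma0^2 L(sigma0)] every line but the steepest one is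
    exponentially small in [1 / nu], so for [n] large and [sigma0] small the
    barrier, hence [theta^sigma0], is within [eps] of [-1 = theta]; oddness
    handles [x < 0]. *)

From Pilot Require Import Defs.
From Stdlib Require Import Reals Lra Lia List Classical ClassicalEpsilon FunctionalExtensionality.
From Coquelicot Require Import Coquelicot.
Open Scope R_scope.

(** A function of [t] in [[a, b]] is extended constantly to [R] by composing with
    [clamp a b]; continuity on [[a, b]] becomes continuity of the extension. *)
Definition clamp (a b t : R) : R := Rmax a (Rmin b t).

Lemma clamp_in a b t : a <= b -> a <= clamp a b t <= b.
Proof. intros; unfold clamp, Rmax, Rmin; repeat destruct Rle_dec; lra. Qed.

Lemma clamp_id a b t : a <= t <= b -> clamp a b t = t.
Proof. intros; unfold clamp, Rmax, Rmin; repeat destruct Rle_dec; lra. Qed.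

Lemma clamp_lipschitz a b t t' :
  a <= b -> Rabs (clamp a b t - clamp a b t') <= Rabs (t - t').
Proof.
  intros; unfold clamp, Rmax, Rmin; repeat destruct Rle_dec;
  unfold Rabs; repeat destruct Rcase_abs; lra.
Qed.

Lemma continuity_pt_clamp a b t : a <= b -> continuity_pt (clamp a b) t.
Proof.
  intros Hab eps Heps. exists eps; split; [exact Heps|].
  intros y [_ Hy]. simpl in *. unfold R_dist in *.
  eapply Rle_lt_trans; [apply clamp_lipschitz|]; assumption.
Qed.

(** Stdlib's rules for [derivable_pt_lim] and [continuity_pt], restated for functions
    written as lambda terms instead of [plus_fct], [mult_fct], ... *)

Lemma D_ext f g x l :
  (forall y, f y = g y) -> derivable_pt_lim f x l -> derivable_pt_lim g x l.
Proof. intros He H. replace g with f; auto. apply functional_extensionality; auto. Qed.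

Lemma D_val f x l l' : l = l' -> derivable_pt_lim f x l -> derivable_pt_lim f x l'.
Proof. intros ->; auto. Qed.

Lemma D_const c x : derivable_pt_lim (fun _ => c) x 0.
Proof. exact (derivable_pt_lim_const c x). Qed.

Lemma D_id x : derivable_pt_lim (fun y => y) x 1.
Proof. exact (derivable_pt_lim_id x). Qed.

Lemma D_plus f g x a b : derivable_pt_lim f x a -> derivable_pt_lim g x b ->
  derivable_pt_lim (fun y => f y + g y) x (a + b).
Proof. exact (derivable_pt_lim_plus f g x a b). Qed.

Lemma D_minus f g x a b : derivable_pt_lim f x a -> derivable_pt_lim g x b ->
  derivable_pt_lim (fun y => f y - g y) x (a - b).
Proof. exact (derivable_pt_lim_minus f g x a b). Qed.

Lemma D_mult f g x a b : derivable_pt_lim f x a -> derivable_pt_lim g x b ->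
  derivable_pt_lim (fun y => f y * g y) x (a * g x + f x * b).
Proof. exact (derivable_pt_lim_mult f g x a b). Qed.

Lemma D_scal c f x a : derivable_pt_lim f x a ->
  derivable_pt_lim (fun y => c * f y) x (c * a).
Proof.
  intros H. apply (D_val _ _ (0 * f x + c * a)); [ring|].
  apply D_mult; [apply D_const|exact H].
Qed.

Lemma D_opp f x a : derivable_pt_lim f x a -> derivable_pt_lim (fun y => - f y) x (- a).
Proof.
  intros H. apply (D_ext (fun y => -1 * f y)); [intros; ring|].
  apply (D_val _ _ (-1 * a)); [ring|]. apply D_scal, H.
Qed.

Lemma D_sq f x a : derivable_pt_lim f x a ->
  derivable_pt_lim (fun y => f y ^ 2) x (2 * a * f x).
Proof.
  intros H. apply (D_ext (fun y => f y * f y)); [intros; ring|].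
  eapply D_val; [|apply D_mult; exact H]. ring.
Qed.

Lemma D_exp f x a : derivable_pt_lim f x a ->
  derivable_pt_lim (fun y => exp (f y)) x (a * exp (f x)).
Proof.
  intros H. apply (D_val _ _ (exp (f x) * a)); [ring|].
  exact (derivable_pt_lim_comp f exp x a _ H (derivable_pt_lim_exp (f x))).
Qed.

Lemma D_div f g x a b : g x <> 0 ->
  derivable_pt_lim f x a -> derivable_pt_lim g x b ->
  derivable_pt_lim (fun y => f y / g y) x ((a * g x - f x * b) / g x ^ 2).
Proof.
  intros Hg H1 H2. eapply D_val; [|exact (derivable_pt_lim_div f g x a b H1 H2 Hg)].
  unfold Rsqr. field; auto.
Qed.

Lemma D_inv f x a : f x <> 0 -> derivable_pt_lim f x a ->
  derivable_pt_lim (fun y => / f y) x (- a / f x ^ 2).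
Proof.
  intros Hf H. apply (D_ext (fun y => 1 / f y)); [intros; unfold Rdiv; ring|].
  eapply D_val; [|apply D_div; [exact Hf|apply D_const|exact H]]. cbv beta. field; auto.
Qed.

Lemma D_affine c d x : derivable_pt_lim (fun y => c * y + d) x c.
Proof. eapply D_val; [|apply D_plus; [apply D_scal, D_id|apply D_const]]. ring. Qed.

Lemma D_neg_arg f x l : derivable_pt_lim f (- x) l ->
  derivable_pt_lim (fun y => f (- y)) x (- l).
Proof.
  intros H. eapply D_val; [|apply (derivable_pt_lim_comp (fun y => - y) f x (-1) l)].
  - ring.
  - eapply D_val; [|apply D_opp, D_id]. ring.
  - exact H.
Qed.

Lemma C_const c x : continuity_pt (fun _ => c) x.
Proof. apply continuity_pt_const. intros ??; auto. Qed.

Lemma C_plus f g x : continuity_pt f x -> continuity_pt g x ->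
  continuity_pt (fun y => f y + g y) x.
Proof. exact (continuity_pt_plus f g x). Qed.

Lemma C_minus f g x : continuity_pt f x -> continuity_pt g x ->
  continuity_pt (fun y => f y - g y) x.
Proof. exact (continuity_pt_minus f g x). Qed.

Lemma C_mult f g x : continuity_pt f x -> continuity_pt g x ->
  continuity_pt (fun y => f y * g y) x.
Proof. exact (continuity_pt_mult f g x). Qed.

Lemma C_scal c f x : continuity_pt f x -> continuity_pt (fun y => c * f y) x.
Proof. intros H. exact (continuity_pt_scal f c x H). Qed.

Lemma C_of_D f x l : derivable_pt_lim f x l -> continuity_pt f x.
Proof. intros H. apply derivable_continuous_pt. exists l. exact H. Qed.

Lemma two_Rabs_le_1_plus_sq x : 2 * Rabs x <= 1 + x ^ 2.
Proof.
  assert (0 <= (x - 1) ^ 2) by apply pow2_ge_0.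
  assert (0 <= (x + 1) ^ 2) by apply pow2_ge_0.
  unfold Rabs; destruct Rcase_abs; nra.
Qed.

Lemma exp_le_exp_of_le a b : a <= b -> exp a <= exp b.
Proof.
  intros H. destruct (Req_dec a b) as [->|Hab]; [lra|].
  left; apply exp_increasing; lra.
Qed.

Lemma continuity_2d_pt_slice_x f t x :
  continuity_2d_pt f t x -> continuity_pt (f t) x.
Proof.
  intros H eps Heps. destruct (H (mkposreal _ Heps)) as [d Hd].
  exists d; split; [apply cond_pos|]. intros y [_ Hy].
  unfold R_dist, dist in *; simpl in *. apply Hd; [|exact Hy].
  rewrite Rminus_eq_0, Rabs_R0; apply cond_pos.
Qed.

Lemma continuity_2d_pt_slice_t f t x :
  continuity_2d_pt f t x -> continuity_pt (fun s => f s x) t.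
Proof.
  intros H eps Heps. destruct (H (mkposreal _ Heps)) as [d Hd].
  exists d; split; [apply cond_pos|]. intros y [_ Hy].
  unfold R_dist, dist in *; simpl in *. apply Hd; [exact Hy|].
  rewrite Rminus_eq_0, Rabs_R0; apply cond_pos.
Qed.

Lemma continuity_2d_pt_neg_x f t x :
  continuity_2d_pt f t (- x) -> continuity_2d_pt (fun t x => f t (- x)) t x.
Proof.
  intros H eps. destruct (H eps) as [d Hd]. exists d. intros u v Hu Hv.
  apply Hd; [exact Hu|]. replace (- v - - x) with (- (v - x)) by ring.
  rewrite Rabs_Ropp; exact Hv.
Qed.

Lemma continuity_2d_pt_lipschitz_x f fx K :
  (forall t x, derivable_pt_lim (f t) x (fx t x)) ->
  (forall t x, Rabs (fx t x) <= K) ->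
  (forall t x, continuity_pt (fun s => f s x) t) ->
  forall t x, continuity_2d_pt f t x.
Proof.
  intros Hd Hb Hc t x eps.
  assert (HK : 0 <= K) by (eapply Rle_trans; [apply Rabs_pos|apply (Hb t x)]).
  assert (He2 : 0 < eps / 2) by (destruct eps; simpl; lra).
  destruct (Hc t x (eps / 2) He2) as [d1 [Hd1 H1]].
  set (d2 := eps / (2 * (K + 1))).
  assert (Hd2 : 0 < d2) by (unfold d2; destruct eps; simpl; apply Rdiv_lt_0_compat; lra).
  exists (mkposreal _ (Rmin_pos _ _ Hd1 Hd2)). intros u v Hu Hv. simpl in Hu, Hv.
  assert (Lip : Rabs (f u v - f u x) <= K * Rabs (v - x)).
  { destruct (Rtotal_order x v) as [Hxv|[<-|Hxv]].
    - destruct (MVT_cor2 (f u) (fx u) x v Hxv) as [z [Hz _]]; [intros; apply Hd|].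
      rewrite Hz, Rabs_mult. apply Rmult_le_compat_r; [apply Rabs_pos|apply Hb].
    - rewrite !Rminus_eq_0, Rabs_R0; lra.
    - destruct (MVT_cor2 (f u) (fx u) v x Hxv) as [z [Hz _]]; [intros; apply Hd|].
      rewrite <- Rabs_Ropp, <- (Rabs_Ropp (v - x)).
      replace (- (f u v - f u x)) with (f u x - f u v) by ring.
      replace (- (v - x)) with (x - v) by ring.
      rewrite Hz, Rabs_mult. apply Rmult_le_compat_r; [apply Rabs_pos|apply Hb]. }
  assert (T2 : Rabs (f u x - f t x) < eps / 2).
  { destruct (Req_dec u t) as [->|Hne].
    - rewrite Rminus_eq_0, Rabs_R0; lra.
    - apply H1. split; [split; [exact I|auto]|]. unfold R_dist, dist; simpl.
      eapply Rlt_le_trans; [apply Hu|apply Rmin_l]. }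
  assert (T1 : K * Rabs (v - x) <= eps / 2).
  { assert (Rabs (v - x) <= d2) by (left; eapply Rlt_le_trans; [apply Hv|apply Rmin_r]).
    apply Rle_trans with (K * d2); [apply Rmult_le_compat_l; auto|].
    unfold d2. destruct eps as [e He]; simpl in *.
    apply Rmult_le_reg_r with (2 * (K + 1)); [lra|].
    replace (K * (e / (2 * (K + 1))) * (2 * (K + 1))) with (K * e) by (field; lra).
    replace (e / 2 * (2 * (K + 1))) with (K * e + e) by field. nra. }
  replace (f u v - f t x) with ((f u v - f u x) + (f u x - f t x)) by ring.
  eapply Rle_lt_trans; [apply Rabs_triang|]. destruct eps; simpl in *; lra.
Qed.

Lemma uniform_continuity_2d_around f a b c d :
  (forall t x, continuity_2d_pt f t x) ->
  forall eps, 0 < eps -> exists del, 0 < del /\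
   forall t x t' x', a <= t <= b -> c <= x <= d ->
     Rabs (t' - t) < del -> Rabs (x' - x) < del -> Rabs (f t' x' - f t x) < eps.
Proof.
  intros Hc eps Heps.
  assert (Hg : forall u v, exists del : posreal, forall u' v', Rabs (u' - u) < 2 * del ->
     Rabs (v' - v) < 2 * del -> Rabs (f u' v' - f u v) < eps / 2).
  { intros u v. destruct (Hc u v (mkposreal (eps / 2) ltac:(lra))) as [del Hd].
    assert (Hp : 0 < del / 2) by (destruct del; simpl; lra).
    exists (mkposreal _ Hp). simpl. intros u' v' H1 H2. apply Hd; lra. }
  set (gauge u v := proj1_sig (constructive_indefinite_description _ (Hg u v))).
  assert (Hgauge : forall u v u' v', Rabs (u' - u) < 2 * gauge u v ->
     Rabs (v' - v) < 2 * gauge u v -> Rabs (f u' v' - f u v) < eps / 2).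
  { intros u v. unfold gauge. destruct constructive_indefinite_description as [g Hgg].
    exact Hgg. }
  destruct (compactness_value_2d a b c d gauge) as [del Hdel].
  exists del; split; [apply cond_pos|].
  intros t x t' x' Ht Hx H1 H2.
  apply NNPP; intro Hn. apply (Hdel t x Ht Hx). intros [u [v [Hu [Hv [Htu [Hxv Hdg]]]]]].
  apply Hn. assert (Hgp : 0 < gauge u v) by apply cond_pos.
  assert (A1 : Rabs (f t x - f u v) < eps / 2) by (apply Hgauge; lra).
  assert (A2 : Rabs (f t' x' - f u v) < eps / 2).
  { apply Hgauge.
    - replace (t' - u) with ((t' - t) + (t - u)) by ring.
      eapply Rle_lt_trans; [apply Rabs_triang|]. lra.
    - replace (x' - v) with ((x' - x) + (x - v)) by ring.
      eapply Rle_lt_trans; [apply Rabs_triang|]. lra. }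
  replace (f t' x' - f t x) with ((f t' x' - f u v) - (f t x - f u v)) by ring.
  eapply Rle_lt_trans; [apply Rabs_triang|]. rewrite Rabs_Ropp. lra.
Qed.

Lemma continuity_2d_rect_max f a b c d : a <= b -> c <= d ->
  (forall t x, continuity_2d_pt f t x) ->
  exists t0 x0, a <= t0 <= b /\ c <= x0 <= d /\
    forall t x, a <= t <= b -> c <= x <= d -> f t x <= f t0 x0.
Proof.
  intros Hab Hcd Hc.
  assert (Hm : forall t, exists xm, c <= xm <= d /\
                 forall x, c <= x <= d -> f t x <= f t xm).
  { intros t. destruct (continuity_ab_maj (f t) c d Hcd) as [xm [H1 H2]].
    - intros; apply continuity_2d_pt_slice_x, Hc.
    - exists xm; split; auto. }
  set (xm t := proj1_sig (constructive_indefinite_description _ (Hm t))).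
  assert (Hxm : forall t, c <= xm t <= d /\ forall x, c <= x <= d -> f t x <= f t (xm t)).
  { intros t; unfold xm; destruct constructive_indefinite_description; simpl; auto. }
  (* the slice maximum [t |-> f t (xm t)] is continuous by uniform continuity *)
  assert (Hmc : forall t, a <= t <= b -> continuity_pt (fun t => f t (xm t)) t).
  { intros t Ht eps Heps.
    destruct (uniform_continuity_2d_around f a b c d Hc eps Heps) as [del [Hdel Hu]].
    exists del; split; auto. intros t' [_ Ht'].
    unfold R_dist, dist in *; simpl in *.
    destruct (Hxm t) as [Ht1 Ht2]. destruct (Hxm t') as [Ht'1 Ht'2].
    assert (B1 := Hu t (xm t) t' (xm t) Ht Ht1 Ht').
    assert (B2 := Hu t (xm t') t' (xm t') Ht Ht'1 Ht').
    rewrite Rminus_eq_0, Rabs_R0 in B1, B2.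
    specialize (B1 Hdel). specialize (B2 Hdel).
    specialize (Ht2 (xm t') Ht'1). specialize (Ht'2 (xm t) Ht1).
    apply Rabs_def2 in B1. apply Rabs_def2 in B2. apply Rabs_def1; lra. }
  destruct (continuity_ab_maj _ a b Hab Hmc) as [t0 [H1 H2]].
  exists t0, (xm t0). destruct (Hxm t0) as [H3 H4].
  repeat split; try lra.
  intros t x Ht Hx. apply Rle_trans with (f t (xm t)); [apply (proj2 (Hxm t)); auto|].
  apply H1; auto.
Qed.

Lemma Rmin_half_pos d h : 0 < d -> 0 < h ->
  0 < Rmin (d / 2) (h / 2) /\ Rmin (d / 2) (h / 2) < d /\ Rmin (d / 2) (h / 2) < h.
Proof. intros; unfold Rmin; destruct Rle_dec; lra. Qed.

Lemma derivable_pt_lim_right_max f t0 l h : 0 < h -> derivable_pt_lim f t0 l ->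
  (forall t, t0 <= t < t0 + h -> f t <= f t0) -> l <= 0.
Proof.
  intros Hh Hd Hm. destruct (Rle_dec l 0) as [|Hl]; auto; exfalso.
  destruct (Hd (l / 2)) as [del Hdel]; [lra|].
  destruct (Rmin_half_pos del h (cond_pos del) Hh) as [K1 [K2 K3]].
  set (k := Rmin (del / 2) (h / 2)) in *.
  specialize (Hdel k (Rgt_not_eq _ _ K1) ltac:(rewrite Rabs_pos_eq; lra)).
  specialize (Hm (t0 + k) ltac:(lra)).
  apply Rabs_def2 in Hdel. destruct Hdel as [_ Hdel].
  assert ((f (t0 + k) - f t0) / k <= 0).
  { unfold Rdiv. apply Rmult_le_0_r; [lra|]. left; apply Rinv_0_lt_compat; lra. }
  lra.
Qed.

Lemma derivable_pt_lim_local_max f x0 l h : 0 < h -> derivable_pt_lim f x0 l ->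
  (forall y, Rabs (y - x0) < h -> f y <= f x0) -> l = 0.
Proof.
  intros Hh Hd Hm. apply Rle_antisym.
  - apply (derivable_pt_lim_right_max f x0 l h Hh Hd).
    intros t Ht. apply Hm. rewrite Rabs_pos_eq; lra.
  - assert (Hd' : derivable_pt_lim (fun y => f (- y)) (- x0) (- l)).
    { apply D_neg_arg. rewrite Ropp_involutive. exact Hd. }
    cut (- l <= 0); [lra|].
    apply (derivable_pt_lim_right_max _ (- x0) _ h Hh Hd').
    intros t Ht. rewrite Ropp_involutive. apply Hm. rewrite Rabs_left1; lra.
Qed.

Lemma derivable_pt_lim2_local_max f f' x0 c h : 0 < h ->
  (forall y, Rabs (y - x0) < h -> derivable_pt_lim f y (f' y)) ->
  derivable_pt_lim f' x0 c ->
  (forall y, Rabs (y - x0) < h -> f y <= f x0) -> c <= 0.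
Proof.
  intros Hh Hd Hd2 Hm.
  assert (H0 : f' x0 = 0).
  { apply (derivable_pt_lim_local_max f x0 _ h Hh); auto.
    apply Hd. rewrite Rminus_eq_0, Rabs_R0; lra. }
  destruct (Rle_dec c 0) as [|Hc]; auto; exfalso.
  destruct (Hd2 (c / 2)) as [del Hdel]; [lra|].
  destruct (Rmin_half_pos del h (cond_pos del) Hh) as [Hk [Hkd Hkh]].
  set (k := Rmin (del / 2) (h / 2)) in *.
  (* [f'] is positive on [(x0, x0 + k]], so [f] increases there, against maximality *)
  assert (Hpos : forall z, 0 < z <= k -> 0 < f' (x0 + z)).
  { intros z Hz.
    specialize (Hdel z (Rgt_not_eq _ _ (proj1 Hz)) ltac:(rewrite Rabs_pos_eq; lra)).
    rewrite H0, Rminus_0_r in Hdel. apply Rabs_def2 in Hdel. destruct Hdel as [_ Hdel].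
    apply Rmult_lt_reg_r with (/ z); [apply Rinv_0_lt_compat; lra|].
    rewrite Rmult_0_l. unfold Rdiv in Hdel. lra. }
  destruct (MVT_cor2 f f' x0 (x0 + k)) as [z [Hz1 Hz2]]; [lra| |].
  { intros z Hz. apply Hd. rewrite Rabs_pos_eq; lra. }
  assert (f (x0 + k) <= f x0).
  { apply Hm. replace (x0 + k - x0) with k by ring. rewrite Rabs_pos_eq; lra. }
  assert (0 < f' z) by (replace z with (x0 + (z - x0)) by ring; apply Hpos; lra).
  assert (0 < f' z * (x0 + k - x0)) by (apply Rmult_lt_0_compat; lra).
  lra.
Qed.

Lemma le_0_at_left_end g T : 0 < T -> continuity_pt g 0 ->
  (forall t, 0 < t <= T -> g t <= 0) -> g 0 <= 0.
Proof.
  intros HT Hc H. destruct (Rle_dec (g 0) 0) as [|Hn]; auto. exfalso.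
  destruct (Hc (g 0) ltac:(lra)) as [d [Hd Hdd]].
  set (t := Rmin (d / 2) T).
  assert (Ht : 0 < t <= T /\ t < d) by (unfold t, Rmin; destruct Rle_dec; lra).
  assert (Hq : Rabs (g t - g 0) < g 0).
  { apply Hdd. split; [split; [exact I|lra]|].
    simpl; unfold R_dist; rewrite Rminus_0_r, Rabs_pos_eq; lra. }
  specialize (H t (proj1 Ht)). apply Rabs_def2 in Hq. lra.
Qed.

Lemma Defs_RInt_eq f a b : ex_RInt f a b -> Defs.RInt f a b = RInt f a b.
Proof.
  intros Hex. unfold Defs.RInt.
  destruct excluded_middle_informative as [H|H].
  - destruct constructive_indefinite_description as [v [pr Hv]]; simpl.
    rewrite <- Hv. symmetry. apply RInt_Reals.
  - exfalso. apply H. exists (RiemannInt (ex_RInt_Reals_0 f a b Hex)).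
    exists (ex_RInt_Reals_0 f a b Hex). reflexivity.
Qed.

Lemma ex_RInt_continuity_pt f a b :
  (forall z, Rmin a b <= z <= Rmax a b -> continuity_pt f z) -> ex_RInt f a b.
Proof.
  intros H. apply (ex_RInt_continuous (V := R_CompleteNormedModule)).
  intros z Hz. apply continuity_pt_filterlim. auto.
Qed.

Lemma Rabs_RInt_0_le f x M : ex_RInt f 0 x ->
  (forall z, Rmin 0 x <= z <= Rmax 0 x -> Rabs (f z) <= M) ->
  Rabs (RInt f 0 x) <= M * Rabs x.
Proof.
  intros Hex Hb. destruct (Rle_dec 0 x) as [Hx|Hx].
  - rewrite (Rabs_pos_eq x), Rmult_comm by lra. replace x with (x - 0) at 2 by ring.
    apply abs_RInt_le_const; auto.
    intros t Ht. apply Hb. unfold Rmin, Rmax; destruct Rle_dec; lra.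
  - assert (Hex' : ex_RInt f x 0) by (apply ex_RInt_swap; auto).
    rewrite <- (opp_RInt_swap (V := R_CompleteNormedModule) f x 0 Hex').
    unfold opp; simpl. rewrite Rabs_Ropp, (Rabs_left x) by lra.
    replace (M * - x) with ((0 - x) * M) by ring. apply abs_RInt_le_const; auto; [lra|].
    intros t Ht. apply Hb. unfold Rmin, Rmax; destruct Rle_dec; lra.
Qed.

Lemma derivable_pt_lim_RInt_upper f a x l r : l < a < r -> l < x < r ->
  (forall z, l < z < r -> continuity_pt f z) ->
  derivable_pt_lim (fun y => RInt f a y) x (f x).
Proof.
  intros Ha Hx Hc. apply is_derive_Reals.
  apply (is_derive_RInt (V := R_CompleteNormedModule) f (fun y => RInt f a y) a x).
  - set (d := Rmin (x - l) (r - x)).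
    assert (Hd : 0 < d) by (unfold d; apply Rmin_pos; lra).
    exists (mkposreal d Hd). intros b0 Hb0. simpl in Hb0. unfold ball in Hb0; simpl in Hb0.
    unfold AbsRing_ball, abs, minus, plus, opp in Hb0; simpl in Hb0.
    assert (Hd1 : d <= x - l) by apply Rmin_l. assert (Hd2 : d <= r - x) by apply Rmin_r.
    apply Rabs_def2 in Hb0.
    apply (RInt_correct (V := R_CompleteNormedModule)). apply ex_RInt_continuity_pt.
    intros z Hz. apply Hc. unfold Rmin, Rmax in Hz; destruct Rle_dec; lra.
  - apply continuity_pt_filterlim, Hc, Hx.
Qed.

Lemma derivable_pt_lim_RInt_lower f t b : (forall x, continuity_pt f x) ->
  derivable_pt_lim (fun a => RInt f a b) t (- f t).
Proof.
  intros Hc. apply is_derive_Reals.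
  apply (is_derive_RInt' (V := R_CompleteNormedModule) f (fun a => RInt f a b) t b).
  - apply filter_forall. intros a0. apply (RInt_correct (V := R_CompleteNormedModule)).
    apply ex_RInt_continuity_pt. auto.
  - apply continuity_pt_filterlim; auto.
Qed.

Lemma RInt_derivative F dF a b :
  (forall z, Rmin a b <= z <= Rmax a b -> derivable_pt_lim F z (dF z)) ->
  (forall z, Rmin a b <= z <= Rmax a b -> continuity_pt dF z) ->
  RInt dF a b = F b - F a.
Proof.
  intros Hd Hc. apply is_RInt_unique.
  apply (is_RInt_derive (V := R_CompleteNormedModule) F dF a b).
  - intros; apply is_derive_Reals; auto.
  - intros; apply continuity_pt_filterlim; auto.
Qed.

Lemma continuity_2d_pt_clamp_sub f a b c d : a <= c -> c <= d -> d <= b ->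
  (forall t x, continuity_2d_pt (fun t x => f (clamp a b t) x) t x) ->
  forall t x, continuity_2d_pt (fun t x => f (clamp c d t) x) t x.
Proof.
  intros Hac Hcd Hdb Hf t x eps.
  destruct (Hf (clamp c d t) x eps) as [del Hdel].
  exists del. intros u v Hu Hv.
  assert (Hcl : forall s, clamp a b (clamp c d s) = clamp c d s).
  { intros s. apply clamp_id. assert (H := clamp_in c d s Hcd). lra. }
  rewrite <- (Hcl u), <- (Hcl t). apply Hdel; [|exact Hv].
  eapply Rle_lt_trans; [apply clamp_lipschitz; lra|exact Hu].
Qed.

Lemma continuity_2d_pt_of_t f t x :
  continuity_pt f t -> continuity_2d_pt (fun t _ => f t) t x.
Proof.
  intros Hc eps. destruct (Hc eps (cond_pos eps)) as [d [Hd Hdd]].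
  exists (mkposreal d Hd). intros u v Hu _. simpl in Hu.
  destruct (Req_dec u t) as [->|Hut].
  - rewrite Rminus_eq_0, Rabs_R0. apply cond_pos.
  - apply (Hdd u). split; [split; [exact I|auto]|exact Hu].
Qed.

Lemma eq_0_at_left_end g T : 0 < T -> continuity_pt g 0 ->
  (forall t, 0 < t <= T -> g t = 0) -> g 0 = 0.
Proof.
  intros HT Hc H. apply Rle_antisym.
  - apply (le_0_at_left_end g T HT Hc). intros; rewrite H; lra.
  - cut (- g 0 <= 0); [lra|].
    apply (le_0_at_left_end (fun t => - g t) T HT).
    + apply (continuity_pt_opp g 0 Hc).
    + intros; rewrite H; lra.
Qed.

(** * A maximum principle for backward parabolic inequalities *)

(** Backward in time, [U_t >= a (b U_x - nu U_xx)] is the subsolution inequality: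
    it keeps [U] from creating a maximum above the level [M]. *)
Definition subsolution_on (t1 t2 nu M : R) (a : R -> R) (b U : R -> R -> R) : Prop :=
  exists Ut Ux Uxx : R -> R -> R,
    (forall t x, t1 <= t < t2 -> derivable_pt_lim (fun s => U s x) t (Ut t x)) /\
    (forall t x, t1 <= t < t2 -> derivable_pt_lim (U t) x (Ux t x)) /\
    (forall t x, t1 <= t < t2 -> derivable_pt_lim (Ux t) x (Uxx t x)) /\
    (forall t x, t1 <= t < t2 -> M < U t x ->
       a t * (b t x * Ux t x - nu * Uxx t x) <= Ut t x).

Section MaxPrinciple.
Variables (a : R -> R) (b U Ut Ux Uxx : R -> R -> R) (A B C M nu t1 t2 : R).
Hypothesis Ht12 : t1 < t2.
Hypothesis Hnu : 0 <= nu.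
Hypothesis Ha : forall t, t1 <= t <= t2 -> 0 < a t <= A.
Hypothesis Hb : forall t x, t1 <= t <= t2 -> Rabs (b t x) <= B.
Hypothesis HU : forall t x, t1 <= t <= t2 -> Rabs (U t x) <= C * (1 + Rabs x).
Hypothesis HUc : forall t x, continuity_2d_pt (fun t x => U (clamp t1 t2 t) x) t x.
Hypothesis HUt : forall t x, t1 <= t < t2 -> derivable_pt_lim (fun s => U s x) t (Ut t x).
Hypothesis HUx : forall t x, t1 <= t < t2 -> derivable_pt_lim (U t) x (Ux t x).
Hypothesis HUxx : forall t x, t1 <= t < t2 -> derivable_pt_lim (Ux t) x (Uxx t x).
Hypothesis Hsub : forall t x, t1 <= t < t2 -> M < U t x ->
  a t * (b t x * Ux t x - nu * Uxx t x) <= Ut t x.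

Definition mp_rate := A * (B + 2 * nu) + 1.

(** The quadratic penalty grows fast enough backwards in time to beat the
    drift [b U_x] and the diffusion [nu U_xx] it creates. *)
Definition penalized eps t x := U t x - eps * exp (mp_rate * (t2 - t)) * (1 + x ^ 2).

Lemma mp_A_pos : 0 < A.
Proof. destruct (Ha t1) as [H1 H2]; lra. Qed.

Lemma mp_B_nonneg : 0 <= B.
Proof. eapply Rle_trans; [apply Rabs_pos|apply (Hb t1 0)]; lra. Qed.

Lemma mp_C_nonneg : 0 <= C.
Proof.
  assert (H := HU t1 0 ltac:(lra)). rewrite Rabs_R0, Rplus_0_r, Rmult_1_r in H.
  eapply Rle_trans; [apply Rabs_pos|exact H].
Qed.

Lemma mp_rate_pos : 0 < mp_rate.
Proof. assert (HA := mp_A_pos). assert (HB := mp_B_nonneg). unfold mp_rate. nra. Qed.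

Lemma penalized_terminal eps y : penalized eps t2 y = U t2 y - eps * (1 + y ^ 2).
Proof. unfold penalized. rewrite Rminus_eq_0, Rmult_0_r, exp_0. ring. Qed.

Lemma penalty_ge eps t y : 0 < eps -> t <= t2 ->
  eps * (1 + y ^ 2) <= eps * exp (mp_rate * (t2 - t)) * (1 + y ^ 2).
Proof.
  intros Heps Ht. assert (0 <= y ^ 2) by apply pow2_ge_0.
  assert (1 <= exp (mp_rate * (t2 - t))).
  { rewrite <- exp_0. apply exp_le_exp_of_le. assert (Hr := mp_rate_pos). nra. }
  rewrite Rmult_assoc. apply Rmult_le_compat_l; [lra|]. nra.
Qed.

Lemma penalized_dt eps t0 x0 : t1 <= t0 < t2 ->
  derivable_pt_lim (fun t => penalized eps t x0) t0
    (Ut t0 x0 + mp_rate * (eps * exp (mp_rate * (t2 - t0))) * (1 + x0 ^ 2)).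
Proof.
  intros Ht0. unfold penalized. eapply D_val; [|apply D_minus; [apply HUt, Ht0|]].
  2: { apply D_mult; [apply D_scal, D_exp|apply D_const].
       eapply D_val; [|apply D_scal, D_minus; [apply D_const|apply D_id]]. reflexivity. }
  cbv beta. ring.
Qed.

Lemma penalized_dx eps t0 y : t1 <= t0 < t2 ->
  derivable_pt_lim (fun y => penalized eps t0 y) y
    (Ux t0 y - eps * exp (mp_rate * (t2 - t0)) * (2 * y)).
Proof.
  intros Ht0. unfold penalized. eapply D_val; [|apply D_minus; [apply HUx, Ht0|]].
  2: { apply D_scal, D_plus; [apply D_const|].
       apply (D_ext (fun y => y * y)); [intros; ring|apply D_mult; apply D_id]. }
  cbv beta. ring.
Qed.

Lemma penalized_no_interior_max eps t0 x0 h : 0 < eps -> 0 < h -> t1 <= t0 < t2 ->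
  M < penalized eps t0 x0 ->
  (forall t, t0 <= t < t0 + h -> penalized eps t x0 <= penalized eps t0 x0) ->
  (forall y, Rabs (y - x0) < h -> penalized eps t0 y <= penalized eps t0 x0) -> False.
Proof.
  intros Heps Hh Ht0 HM Hmt Hmx.
  set (P := eps * exp (mp_rate * (t2 - t0))).
  assert (HP : 0 < P) by (apply Rmult_lt_0_compat; [lra|apply exp_pos]).
  assert (Dxx : derivable_pt_lim (fun y => Ux t0 y - P * (2 * y)) x0 (Uxx t0 x0 - P * 2)).
  { eapply D_val; [|apply D_minus; [apply HUxx; lra|apply D_scal, D_scal, D_id]]. ring. }
  (* at the maximum: [U_t <= - mp_rate P (1 + x0^2)], [U_x = 2 P x0], [U_xx <= 2 P] *)
  assert (Ht_max := derivable_pt_lim_right_max _ _ _ h Hh (penalized_dt eps t0 x0 Ht0) Hmt).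
  assert (Hx_crit := derivable_pt_lim_local_max _ _ _ h Hh (penalized_dx eps t0 x0 Ht0) Hmx).
  assert (Hxx_max := derivable_pt_lim2_local_max _ _ _ _ h Hh
                       (fun y _ => penalized_dx eps t0 y Ht0) Dxx Hmx).
  fold P in Ht_max, Hx_crit.
  assert (Hpen := penalty_ge eps t0 x0 Heps ltac:(lra)).
  assert (HUM : M < U t0 x0) by (unfold penalized in HM; fold P in HM; nra).
  assert (Hsub0 := Hsub t0 x0 Ht0 HUM).
  assert (Ha0 := Ha t0 ltac:(lra)).
  assert (HB := mp_B_nonneg). assert (HA := mp_A_pos).
  assert (Hx2 : 0 <= x0 ^ 2) by apply pow2_ge_0.
  assert (Hdrift : - (B * P * (1 + x0 ^ 2)) <= b t0 x0 * Ux t0 x0).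
  { replace (Ux t0 x0) with (P * (2 * x0)) by lra.
    assert (Hbx : Rabs (b t0 x0 * (2 * x0)) <= B * (1 + x0 ^ 2)).
    { rewrite Rabs_mult, (Rabs_mult 2), (Rabs_pos_eq 2) by lra.
      assert (0 <= Rabs x0) by apply Rabs_pos.
      apply Rmult_le_compat; [apply Rabs_pos|lra|apply Hb; lra|].
      apply two_Rabs_le_1_plus_sq. }
    apply Rabs_le_between in Hbx.
    replace (b t0 x0 * (P * (2 * x0))) with (P * (b t0 x0 * (2 * x0))) by ring.
    replace (- (B * P * (1 + x0 ^ 2))) with (P * - (B * (1 + x0 ^ 2))) by ring.
    apply Rmult_le_compat_l; lra. }
  assert (Hdiff : nu * Uxx t0 x0 <= 2 * nu * P * (1 + x0 ^ 2)).
  { apply Rle_trans with (nu * (2 * P)); [apply Rmult_le_compat_l; lra|].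
    assert (0 <= nu * P * x0 ^ 2) by (apply Rmult_le_pos; [apply Rmult_le_pos|]; lra).
    lra. }
  assert (Hlow : - (A * ((B + 2 * nu) * P * (1 + x0 ^ 2))) <= Ut t0 x0).
  { eapply Rle_trans; [|exact Hsub0].
    assert (0 <= (B + 2 * nu) * P * (1 + x0 ^ 2)) by (apply Rmult_le_pos; nra).
    nra. }
  unfold mp_rate in Ht_max. nra.
Qed.

Lemma penalized_continuous eps : forall t x, continuity_2d_pt
  (fun t x => U (clamp t1 t2 t) x - eps * exp (mp_rate * (t2 - t)) * (1 + x * x)) t x.
Proof.
  intros t x. apply continuity_2d_pt_minus; [apply HUc|].
  apply continuity_2d_pt_mult; [apply continuity_2d_pt_mult; [apply continuity_2d_pt_const|]|].
  - apply (continuity_1d_2d_pt_comp exp (fun t _ => mp_rate * (t2 - t))).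
    + apply derivable_continuous_pt, derivable_pt_exp.
    + apply continuity_2d_pt_mult; [apply continuity_2d_pt_const|].
      apply continuity_2d_pt_minus; [apply continuity_2d_pt_const|apply continuity_2d_pt_id1].
  - apply continuity_2d_pt_plus; [apply continuity_2d_pt_const|].
    apply continuity_2d_pt_mult; apply continuity_2d_pt_id2.
Qed.

Lemma penalized_le_rectangle eps xl xr : 0 < eps -> xl < xr ->
  (forall t, t1 <= t <= t2 -> penalized eps t xl <= M) ->
  (forall t, t1 <= t <= t2 -> penalized eps t xr <= M) ->
  (forall y, xl <= y <= xr -> penalized eps t2 y <= M) ->
  forall t y, t1 <= t <= t2 -> xl <= y <= xr -> penalized eps t y <= M.
Proof.
  intros Heps Hx Hl Hr Htop t y Ht Hy.
  destruct (continuity_2d_rect_max _ t1 t2 xl xr ltac:(lra) ltac:(lra)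
              (penalized_continuous eps)) as [t0 [x0 [H0t [H0x Hmax]]]].
  assert (Hmax' : forall t x, t1 <= t <= t2 -> xl <= x <= xr ->
                    penalized eps t x <= penalized eps t0 x0).
  { intros t' x' Ht' Hx'. specialize (Hmax t' x' Ht' Hx').
    rewrite !clamp_id in Hmax by lra. unfold penalized.
    replace (x' ^ 2) with (x' * x') by ring. replace (x0 ^ 2) with (x0 * x0) by ring. lra. }
  destruct (Rle_dec (penalized eps t y) M) as [|Hn]; auto. exfalso.
  assert (Hp : M < penalized eps t0 x0) by (specialize (Hmax' t y Ht Hy); lra).
  assert (Ht0 : t0 < t2) by (destruct (Req_dec t0 t2) as [->|]; [specialize (Htop x0 H0x)|]; lra).
  assert (Hx0l : xl < x0) by (destruct (Req_dec x0 xl) as [->|]; [specialize (Hl t0 H0t)|]; lra).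
  assert (Hx0r : x0 < xr) by (destruct (Req_dec x0 xr) as [->|]; [specialize (Hr t0 H0t)|]; lra).
  set (h := Rmin (t2 - t0) (Rmin (x0 - xl) (xr - x0))).
  assert (Hh : 0 < h) by (unfold h; repeat apply Rmin_pos; lra).
  assert (h <= t2 - t0 /\ h <= x0 - xl /\ h <= xr - x0) as [Hh1 [Hh2 Hh3]].
  { unfold h, Rmin. repeat destruct Rle_dec; lra. }
  apply (penalized_no_interior_max eps t0 x0 h Heps Hh ltac:(lra) Hp).
  - intros t' Ht'. apply Hmax'; lra.
  - intros y' Hy'. apply Rabs_def2 in Hy'. apply Hmax'; lra.
Qed.

Lemma penalized_below_far eps : 0 < eps -> exists X, 0 < X /\
  forall t y, t1 <= t <= t2 -> X <= Rabs y -> penalized eps t y < M.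
Proof.
  intros Heps. assert (HC := mp_C_nonneg).
  set (K := (2 * C + Rabs M) / eps).
  assert (HK : 0 <= K) by (unfold K; apply Rmult_le_pos; [|left; apply Rinv_0_lt_compat];
                             assert (0 <= Rabs M) by apply Rabs_pos; lra).
  exists (1 + K). split; [lra|]. intros t y Ht Hy.
  assert (Hpen := penalty_ge eps t y Heps ltac:(lra)).
  assert (HUy := HU t y Ht). apply Rabs_le_between in HUy.
  assert (Hy2 : y ^ 2 = Rabs y * Rabs y) by (rewrite <- (pow2_abs y); ring).
  assert (HepsK : eps * K = 2 * C + Rabs M) by (unfold K; field; lra).
  assert (HMabs : - Rabs M <= M) by (unfold Rabs; destruct Rcase_abs; lra).
  assert (0 <= Rabs M) by apply Rabs_pos.
  assert (eps * (Rabs y * (1 + K)) <= eps * y ^ 2).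
  { apply Rmult_le_compat_l; [lra|]. rewrite Hy2. apply Rmult_le_compat_l; [apply Rabs_pos|lra]. }
  assert (Hsplit : eps * (Rabs y * (1 + K)) = eps * Rabs y + Rabs y * (2 * C + Rabs M))
    by (rewrite <- HepsK; ring).
  assert (0 <= Rabs y) by apply Rabs_pos.
  assert (C <= C * Rabs y) by nra.
  assert (Rabs M <= Rabs M * Rabs y) by nra.
  assert (0 <= eps * Rabs y) by nra.
  unfold penalized. lra.
Qed.

Lemma penalized_le_half eps xl : 0 < eps ->
  (forall y, xl <= y -> penalized eps t2 y <= M) ->
  (forall t, t1 <= t <= t2 -> penalized eps t xl <= M) ->
  forall t x, t1 <= t <= t2 -> xl <= x -> penalized eps t x <= M.
Proof.
  intros Heps Htop Hl t x Ht Hx.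
  destruct (Req_dec x xl) as [->|Hxl]; [apply Hl, Ht|].
  destruct (penalized_below_far eps Heps) as [X [HX Hfar]].
  set (xr := X + Rabs x + Rabs xl).
  assert (0 <= Rabs x) by apply Rabs_pos. assert (0 <= Rabs xl) by apply Rabs_pos.
  assert (x <= Rabs x) by apply RRle_abs. assert (xl <= Rabs xl) by apply RRle_abs.
  apply (penalized_le_rectangle eps xl xr); auto; unfold xr; try lra.
  - intros t' Ht'. left. apply Hfar; [exact Ht'|]. rewrite Rabs_pos_eq; lra.
  - intros y Hy. apply Htop. lra.
Qed.

Lemma penalized_le eps : 0 < eps -> (forall y, penalized eps t2 y <= M) ->
  forall t x, t1 <= t <= t2 -> penalized eps t x <= M.
Proof.
  intros Heps Htop t x Ht.
  destruct (penalized_below_far eps Heps) as [X [HX Hfar]].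
  assert (Habs : - Rabs x <= x) by (unfold Rabs; destruct Rcase_abs; lra).
  assert (0 <= Rabs x) by apply Rabs_pos.
  apply (penalized_le_half eps (- (X + Rabs x))); auto; [|lra].
  intros t' Ht'. left. apply Hfar; [exact Ht'|].
  rewrite Rabs_Ropp, Rabs_pos_eq; lra.
Qed.

End MaxPrinciple.

Section Subsolutions.
Variables (a : R -> R) (b U : R -> R -> R) (A B C M nu t1 t2 : R).
Hypothesis Ht12 : t1 < t2.
Hypothesis Hnu : 0 <= nu.
Hypothesis Ha : forall t, t1 <= t <= t2 -> 0 < a t <= A.
Hypothesis Hb : forall t x, t1 <= t <= t2 -> Rabs (b t x) <= B.
Hypothesis HU : forall t x, t1 <= t <= t2 -> Rabs (U t x) <= C * (1 + Rabs x).
Hypothesis HUc : forall t x, continuity_2d_pt (fun t x => U (clamp t1 t2 t) x) t x.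
Hypothesis Hsub : subsolution_on t1 t2 nu M a b U.

Theorem subsolution_le_penalized eps : 0 < eps ->
  (forall y, U t2 y - eps * (1 + y ^ 2) <= M) ->
  forall t x, t1 <= t <= t2 ->
    U t x - eps * exp (mp_rate A B nu * (t2 - t)) * (1 + x ^ 2) <= M.
Proof.
  intros Heps Htop. destruct Hsub as [Ut [Ux [Uxx [HUt [HUx [HUxx Hs]]]]]].
  eapply (penalized_le a b U Ut Ux Uxx A B C M nu t1 t2); eauto.
  intros y. rewrite penalized_terminal. apply Htop.
Qed.

Lemma le_of_forall_penalized t x :
  (forall eps, 0 < eps -> U t x - eps * exp (mp_rate A B nu * (t2 - t)) * (1 + x ^ 2) <= M) ->
  U t x <= M.
Proof.
  intros H. apply Rle_plus_epsilon. intros e He.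
  set (k := exp (mp_rate A B nu * (t2 - t)) * (1 + x ^ 2)).
  assert (Hk : 0 < k).
  { apply Rmult_lt_0_compat; [apply exp_pos|]. assert (0 <= x ^ 2) by apply pow2_ge_0. lra. }
  specialize (H (e / k) ltac:(apply Rdiv_lt_0_compat; lra)).
  replace (e / k * exp (mp_rate A B nu * (t2 - t)) * (1 + x ^ 2)) with (e / k * k) in H
    by (unfold k; ring).
  replace (e / k * k) with e in H by (field; lra).
  lra.
Qed.

Theorem subsolution_le : (forall y, U t2 y <= M) ->
  forall t x, t1 <= t <= t2 -> U t x <= M.
Proof.
  intros Htop t x Ht. apply le_of_forall_penalized. intros eps Heps.
  apply subsolution_le_penalized; auto.
  intros y. assert (0 <= y ^ 2) by apply pow2_ge_0. specialize (Htop y). nra.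
Qed.

Theorem subsolution_le_half xl : (forall y, xl <= y -> U t2 y <= M) ->
  (forall t, t1 <= t <= t2 -> U t xl <= M) ->
  forall t x, t1 <= t <= t2 -> xl <= x -> U t x <= M.
Proof.
  intros Htop Hl t x Ht Hx. apply le_of_forall_penalized. intros eps Heps.
  destruct Hsub as [Ut [Ux [Uxx [HUt [HUx [HUxx Hs]]]]]].
  eapply (penalized_le_half a b U Ut Ux Uxx A B C M nu t1 t2); eauto.
  - intros y Hy. rewrite penalized_terminal.
    assert (0 <= y ^ 2) by apply pow2_ge_0. specialize (Htop y Hy). nra.
  - intros t' Ht'. unfold penalized.
    assert (H : eps * (1 + xl ^ 2) <= eps * exp (mp_rate A B nu * (t2 - t')) * (1 + xl ^ 2))
      by (eapply penalty_ge; eauto; lra).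
    specialize (Hl t' Ht').
    assert (0 <= xl ^ 2) by apply pow2_ge_0. nra.
Qed.

End Subsolutions.

(** * Comparison principle *)

Record classical_solution (T nu : R) (a : R -> R) (th dt dx dxx : R -> R -> R) : Prop := {
  sol_cont : forall t x, continuity_2d_pt (fun t x => th (clamp 0 T t) x) t x;
  sol_dt_cont : forall t x, 0 < t < T -> continuity_2d_pt dt t x;
  sol_dx_cont : forall t x, 0 < t < T -> continuity_2d_pt dx t x;
  sol_dxx_cont : forall t x, 0 < t < T -> continuity_2d_pt dxx t x;
  sol_dt : forall t x, 0 < t < T -> derivable_pt_lim (fun s => th s x) t (dt t x);
  sol_dx : forall t x, 0 < t < T -> derivable_pt_lim (th t) x (dx t x);
  sol_dxx : forall t x, 0 < t < T -> derivable_pt_lim (dx t) x (dxx t x);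
  sol_pde : forall t x, 0 < t < T ->
    dt t x - a t * th t x * dx t x + nu * a t * dxx t x = 0 }.

Arguments sol_cont {T nu a th dt dx dxx}.
Arguments sol_dt_cont {T nu a th dt dx dxx}.
Arguments sol_dx_cont {T nu a th dt dx dxx}.
Arguments sol_dxx_cont {T nu a th dt dx dxx}.
Arguments sol_dt {T nu a th dt dx dxx}.
Arguments sol_dx {T nu a th dt dx dxx}.
Arguments sol_dxx {T nu a th dt dx dxx}.
Arguments sol_pde {T nu a th dt dx dxx}.

Section Comparison.
Variables (T A B K nu : R) (a : R -> R) (th dt dx dxx Phi Pt Px Pxx : R -> R -> R).
Hypothesis HT : 0 < T.
Hypothesis Hnu : 0 <= nu.
Hypothesis HK : 0 <= K.
Hypothesis Ha : forall t, 0 <= t <= T -> 0 < a t <= A.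
Hypothesis Hsol : classical_solution T nu a th dt dx dxx.
Hypothesis Hth : forall t x, 0 <= t <= T -> Rabs (th t x) <= B.
Hypothesis HPhi : forall t x, 0 <= t <= T -> Rabs (Phi t x) <= B.
Hypothesis HPc : forall t x, continuity_2d_pt (fun t x => Phi (clamp 0 T t) x) t x.
Hypothesis HPt : forall t x, 0 < t < T -> derivable_pt_lim (fun s => Phi s x) t (Pt t x).
Hypothesis HPx : forall t x, 0 < t < T -> derivable_pt_lim (Phi t) x (Px t x).
Hypothesis HPxx : forall t x, 0 < t < T -> derivable_pt_lim (Px t) x (Pxx t x).
Hypothesis Hsuper : forall t x, 0 < t < T ->
  Pt t x - a t * Phi t x * Px t x + nu * a t * Pxx t x <= 0.
Hypothesis HPxK : forall t x, 0 < t < T -> - K <= Px t x.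

(** The exponential weight absorbs the zero-order term [a (th - Phi) Phi_x]. *)
Definition weighted_gap t x := exp (A * K * t) * (th t x - Phi t x).

Lemma weighted_gap_subsolution t1 : 0 < t1 < T ->
  subsolution_on t1 T nu 0 a th weighted_gap.
Proof.
  intros Ht1. destruct Hsol as [_ _ _ _ Hdt Hdx Hdxx Hpde].
  exists (fun t x => A * K * weighted_gap t x + exp (A * K * t) * (dt t x - Pt t x)),
         (fun t x => exp (A * K * t) * (dx t x - Px t x)),
         (fun t x => exp (A * K * t) * (dxx t x - Pxx t x)).
  repeat split.
  - intros t x Ht. unfold weighted_gap.
    eapply D_val;
      [|apply D_mult; [apply D_exp, D_scal, D_id|apply D_minus; [apply Hdt|apply HPt]; lra]].
    cbv beta; ring.
  - intros t x Ht. apply D_scal, D_minus; [apply Hdx|apply HPx]; lra.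
  - intros t x Ht. apply D_scal, D_minus; [apply Hdxx|apply HPxx]; lra.
  - intros t x Ht Hpos. unfold weighted_gap in *.
    set (E := exp (A * K * t)) in *. assert (HE : 0 < E) by apply exp_pos.
    assert (Hv : 0 < th t x - Phi t x).
    { apply Rnot_le_lt. intro Hn. assert (E * (th t x - Phi t x) <= 0) by nra. lra. }
    assert (H1 := Hpde t x ltac:(lra)). assert (H2 := Hsuper t x ltac:(lra)).
    assert (H3 := HPxK t x ltac:(lra)). assert (H4 := Ha t ltac:(lra)).
    assert (Hzero : - (A * K * (th t x - Phi t x)) <= a t * ((th t x - Phi t x) * Px t x)).
    { assert (a t * K <= A * K) by (apply Rmult_le_compat_r; lra).
      assert (- K * (th t x - Phi t x) <= (th t x - Phi t x) * Px t x) by nra.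
      nra. }
    assert (Hgap : a t * (th t x * (dx t x - Px t x) - nu * (dxx t x - Pxx t x))
                   <= A * K * (th t x - Phi t x) + (dt t x - Pt t x)) by nra.
    replace (a t * (th t x * (E * (dx t x - Px t x)) - nu * (E * (dxx t x - Pxx t x))))
      with (E * (a t * (th t x * (dx t x - Px t x) - nu * (dxx t x - Pxx t x)))) by ring.
    replace (A * K * (E * (th t x - Phi t x)) + E * (dt t x - Pt t x))
      with (E * (A * K * (th t x - Phi t x) + (dt t x - Pt t x))) by ring.
    apply Rmult_le_compat_l; lra.
Qed.

Lemma weighted_gap_bound t1 : 0 <= t1 ->
  forall t x, t1 <= t <= T -> Rabs (weighted_gap t x) <= exp (A * K * T) * (2 * B) * (1 + Rabs x).
Proof.
  intros Ht1 t x Ht. assert (HA : 0 < A) by (destruct (Ha 0); lra).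
  assert (HAK : 0 <= A * K) by nra.
  assert (HE : exp (A * K * t) <= exp (A * K * T))
    by (apply exp_le_exp_of_le, Rmult_le_compat_l; lra).
  assert (Hd : Rabs (th t x - Phi t x) <= 2 * B).
  { unfold Rminus. eapply Rle_trans; [apply Rabs_triang|]. rewrite Rabs_Ropp.
    assert (H1 := Hth t x ltac:(lra)). assert (H2 := HPhi t x ltac:(lra)). lra. }
  unfold weighted_gap. rewrite Rabs_mult, Rabs_pos_eq by (left; apply exp_pos).
  assert (0 <= Rabs x) by apply Rabs_pos.
  assert (0 <= exp (A * K * T) * (2 * B)) by (apply Rmult_le_pos; [left; apply exp_pos|];
    eapply Rle_trans; [apply Rabs_pos|exact Hd]).
  apply Rle_trans with (exp (A * K * T) * (2 * B)); [|nra].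
  apply Rmult_le_compat; auto; [left; apply exp_pos|apply Rabs_pos].
Qed.

Lemma weighted_gap_continuous t1 : 0 <= t1 < T ->
  forall t x, continuity_2d_pt (fun t x => weighted_gap (clamp t1 T t) x) t x.
Proof.
  intros Ht1 t x. unfold weighted_gap.
  apply continuity_2d_pt_mult.
  - apply (continuity_2d_pt_of_t (fun t => exp (A * K * clamp t1 T t))).
    apply (continuity_pt_comp (fun t => A * K * clamp t1 T t) exp).
    + apply C_scal, continuity_pt_clamp; lra.
    + apply derivable_continuous_pt, derivable_pt_exp.
  - apply continuity_2d_pt_minus.
    + apply (continuity_2d_pt_clamp_sub th 0 T); [lra|lra|lra|exact (sol_cont Hsol)].
    + apply (continuity_2d_pt_clamp_sub Phi 0 T); [lra|lra|lra|exact HPc].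
Qed.

Lemma le_of_weighted_gap_le_0 t x : weighted_gap t x <= 0 -> th t x <= Phi t x.
Proof.
  unfold weighted_gap. intros H. assert (HE := exp_pos (A * K * t)).
  apply Rnot_lt_le. intro Hn. assert (0 < exp (A * K * t) * (th t x - Phi t x)) by
    (apply Rmult_lt_0_compat; lra). lra.
Qed.

Lemma comparison_at_0 x : (forall t, 0 < t <= T -> th t x <= Phi t x) -> th 0 x <= Phi 0 x.
Proof.
  intros H. set (g s := th (clamp 0 T s) x - Phi (clamp 0 T s) x).
  assert (Hc : continuity_pt g 0).
  { apply (continuity_2d_pt_slice_t (fun s x => th (clamp 0 T s) x - Phi (clamp 0 T s) x)).
    apply continuity_2d_pt_minus; [apply (sol_cont Hsol)|apply HPc]. }
  assert (Hg0 : g 0 <= 0).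
  { apply (le_0_at_left_end g T HT Hc). intros t Ht. unfold g.
    rewrite clamp_id by lra. specialize (H t Ht). lra. }
  unfold g in Hg0. rewrite clamp_id in Hg0 by lra. lra.
Qed.

Theorem comparison : (forall x, th T x <= Phi T x) ->
  forall t x, 0 <= t <= T -> th t x <= Phi t x.
Proof.
  intros Hterm.
  assert (Hpos : forall t x, 0 < t <= T -> th t x <= Phi t x).
  { intros t x Ht. destruct (Req_dec t T) as [->|]; [apply Hterm|].
    apply le_of_weighted_gap_le_0.
    apply (subsolution_le a th weighted_gap A B (exp (A * K * T) * (2 * B)) 0 nu t T);
      try lra; auto.
    - intros; apply Ha; lra.
    - intros; apply Hth; lra.
    - apply weighted_gap_bound; lra.
    - apply weighted_gap_continuous; lra.
    - apply weighted_gap_subsolution; lra.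
    - intros y. unfold weighted_gap. specialize (Hterm y).
      assert (HE := exp_pos (A * K * T)). nra. }
  intros t x Ht. destruct (Req_dec t 0) as [->|Ht0].
  - apply comparison_at_0. auto.
  - apply Hpos; lra.
Qed.

Theorem comparison_half xl : (forall x, xl <= x -> th T x <= Phi T x) ->
  (forall t, 0 <= t <= T -> th t xl <= Phi t xl) ->
  forall t x, 0 <= t <= T -> xl <= x -> th t x <= Phi t x.
Proof.
  intros Hterm Hbd.
  assert (Hpos : forall t x, 0 < t <= T -> xl <= x -> th t x <= Phi t x).
  { intros t x Ht Hx. destruct (Req_dec t T) as [->|]; [apply Hterm, Hx|].
    apply le_of_weighted_gap_le_0.
    apply (subsolution_le_half a th weighted_gap A B (exp (A * K * T) * (2 * B)) 0 nu t T)
      with (xl := xl);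
      try lra; auto.
    - intros; apply Ha; lra.
    - intros; apply Hth; lra.
    - apply weighted_gap_bound; lra.
    - apply weighted_gap_continuous; lra.
    - apply weighted_gap_subsolution; lra.
    - intros y Hy. unfold weighted_gap. specialize (Hterm y Hy).
      assert (HE := exp_pos (A * K * T)). nra.
    - intros t' Ht'. unfold weighted_gap. specialize (Hbd t' ltac:(lra)).
      assert (HE := exp_pos (A * K * t')). nra. }
  intros t x Ht Hx. destruct (Req_dec t 0) as [->|Ht0].
  - apply comparison_at_0. intros; auto.
  - apply Hpos; lra.
Qed.

End Comparison.

(** * Uniqueness *)

(** Two solutions [th1], [th2] with the same terminal data are compared
    through the antiderivative [V = int_0^x (th1 - th2)]: up to a function of
    [t] alone, [V] solves a linear equation with the bounded drift
    [(th1 + th2) / 2], so the maximum principle applies to it although nothing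
    is known about the growth of [th1_x] or [th2_x]. *)
Section Uniqueness.
Variables (T A B nu : R) (a : R -> R) (th1 dt1 dx1 dxx1 th2 dt2 dx2 dxx2 : R -> R -> R).
Hypothesis HT : 0 < T.
Hypothesis Hnu : 0 <= nu.
Hypothesis Ha : forall t, 0 <= t <= T -> 0 < a t <= A.
Hypothesis Hac : forall t, 0 < t < T -> continuity_pt a t.
Hypothesis Hsol1 : classical_solution T nu a th1 dt1 dx1 dxx1.
Hypothesis Hsol2 : classical_solution T nu a th2 dt2 dx2 dxx2.
Hypothesis Hb1 : forall t x, 0 <= t <= T -> Rabs (th1 t x) <= B.
Hypothesis Hb2 : forall t x, 0 <= t <= T -> Rabs (th2 t x) <= B.
Hypothesis Hterm : forall x, th1 T x = th2 T x.

Definition sol_diff t x := th1 t x - th2 t x.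
Definition flux_diff t x := (th1 t x ^ 2 - th2 t x ^ 2) / 2 - nu * (dx1 t x - dx2 t x).
Definition flux_diff_x t x :=
  th1 t x * dx1 t x - th2 t x * dx2 t x - nu * (dxx1 t x - dxx2 t x).
Definition diff_antider t x := RInt (sol_diff t) 0 x.
Definition flux_at_0_int t := RInt (fun s => a s * flux_diff s 0) (T / 2) t.
Definition diff_potential t x := diff_antider t x + flux_at_0_int t.
Definition sol_mean t x := (th1 t x + th2 t x) / 2.

Lemma uniq_B_nonneg : 0 <= B.
Proof. eapply Rle_trans; [apply Rabs_pos|apply (Hb1 0 0)]; lra. Qed.

Lemma sol_diff_bound t x : 0 <= t <= T -> Rabs (sol_diff t x) <= 2 * B.
Proof.
  intros Ht. unfold sol_diff. assert (H1 := Hb1 t x Ht). assert (H2 := Hb2 t x Ht).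
  apply Rabs_le_between in H1. apply Rabs_le_between in H2. apply Rabs_le. lra.
Qed.

Lemma sol_diff_dx t x : 0 < t < T -> derivable_pt_lim (sol_diff t) x (dx1 t x - dx2 t x).
Proof. intros Ht. apply D_minus; [apply (sol_dx Hsol1)|apply (sol_dx Hsol2)]; exact Ht. Qed.

Lemma sol_diff_continuous_x t x : 0 < t < T -> continuity_pt (sol_diff t) x.
Proof. intros Ht. eapply C_of_D, sol_diff_dx, Ht. Qed.

Lemma diff_antider_dx t x : 0 < t < T -> derivable_pt_lim (diff_antider t) x (sol_diff t x).
Proof.
  intros Ht. unfold diff_antider.
  apply (derivable_pt_lim_RInt_upper _ 0 x (- Rabs x - 1) (Rabs x + 1)).
  - assert (0 <= Rabs x) by apply Rabs_pos. lra.
  - assert (- Rabs x <= x <= Rabs x) by (apply Rabs_le_between; lra). lra.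
  - intros z _. apply sol_diff_continuous_x, Ht.
Qed.

Lemma flux_diff_dx t x : 0 < t < T -> derivable_pt_lim (flux_diff t) x (flux_diff_x t x).
Proof.
  intros Ht. unfold flux_diff, flux_diff_x.
  assert (D1 := sol_dx Hsol1 t x Ht). assert (D2 := sol_dx Hsol2 t x Ht).
  assert (D11 := sol_dxx Hsol1 t x Ht). assert (D22 := sol_dxx Hsol2 t x Ht).
  eapply D_val; [|apply D_minus; [apply (D_ext (fun y => / 2 * (th1 t y ^ 2 - th2 t y ^ 2)));
    [intros; unfold Rdiv; ring|apply D_scal, D_minus; apply D_sq; eassumption]|
    apply D_scal, D_minus; eassumption]].
  field.
Qed.

Lemma flux_diff_x_continuous t x : 0 < t < T -> continuity_pt (flux_diff_x t) x.
Proof.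
  intros Ht. unfold flux_diff_x.
  assert (Cth1 := C_of_D _ _ _ (sol_dx Hsol1 t x Ht)).
  assert (Cth2 := C_of_D _ _ _ (sol_dx Hsol2 t x Ht)).
  assert (Cdx1 := continuity_2d_pt_slice_x _ _ _ (sol_dx_cont Hsol1 t x Ht)).
  assert (Cdx2 := continuity_2d_pt_slice_x _ _ _ (sol_dx_cont Hsol2 t x Ht)).
  assert (Cdxx1 := continuity_2d_pt_slice_x _ _ _ (sol_dxx_cont Hsol1 t x Ht)).
  assert (Cdxx2 := continuity_2d_pt_slice_x _ _ _ (sol_dxx_cont Hsol2 t x Ht)).
  apply C_minus; [apply C_minus; apply C_mult; auto|apply C_scal, C_minus; auto].
Qed.

Lemma diff_antider_dt t x : 0 < t < T ->
  derivable_pt_lim (fun s => diff_antider s x) t (a t * (flux_diff t x - flux_diff t 0)).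
Proof.
  intros Ht.
  set (d := Rmin t (T - t)).
  assert (Hd : 0 < d) by (unfold d; apply Rmin_pos; lra).
  assert (Hnear : forall u, Rabs (u - t) < d -> 0 < u < T).
  { intros u Hu. apply Rabs_def2 in Hu. unfold d, Rmin in Hu. destruct Rle_dec; lra. }
  assert (Hder : forall u y, 0 < u < T -> Derive (fun z => sol_diff z y) u = dt1 u y - dt2 u y).
  { intros u y Hu. apply is_derive_unique, is_derive_Reals.
    apply D_minus; [apply (sol_dt Hsol1)|apply (sol_dt Hsol2)]; exact Hu. }
  assert (Heq : RInt (fun y => Derive (fun u => sol_diff u y) t) 0 x
                = a t * (flux_diff t x - flux_diff t 0)).
  { rewrite (RInt_ext _ (fun y => a t * flux_diff_x t y)).
    - rewrite (RInt_scal (V := R_CompleteNormedModule)).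
      + unfold scal; simpl; unfold mult; simpl. f_equal.
        apply (RInt_derivative (flux_diff t)); intros;
          [apply flux_diff_dx|apply flux_diff_x_continuous]; auto.
      + apply ex_RInt_continuity_pt. intros; apply flux_diff_x_continuous; auto.
    - intros y _. rewrite Hder by auto. unfold flux_diff_x.
      assert (H1 := sol_pde Hsol1 t y Ht). assert (H2 := sol_pde Hsol2 t y Ht). nra. }
  apply is_derive_Reals. unfold diff_antider. rewrite <- Heq.
  apply (is_derive_RInt_param (fun u y => sol_diff u y) 0 x t).
  - exists (mkposreal d Hd). intros u Hu y _. simpl in Hu. unfold ball in Hu; simpl in Hu.
    unfold AbsRing_ball, abs, minus, plus, opp in Hu; simpl in Hu.
    exists (dt1 u y - dt2 u y). apply is_derive_Reals.
    apply D_minus; [apply (sol_dt Hsol1)|apply (sol_dt Hsol2)]; auto.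
  - intros y _. apply continuity_2d_pt_ext_loc with (f := fun u y => dt1 u y - dt2 u y).
    + exists (mkposreal d Hd). intros u w Hu _. simpl in Hu. rewrite Hder; auto.
    + apply continuity_2d_pt_minus; [apply (sol_dt_cont Hsol1)|apply (sol_dt_cont Hsol2)]; auto.
  - exists (mkposreal d Hd). intros u Hu. simpl in Hu. unfold ball in Hu; simpl in Hu.
    unfold AbsRing_ball, abs, minus, plus, opp in Hu; simpl in Hu.
    apply ex_RInt_continuity_pt. intros; apply sol_diff_continuous_x; auto.
Qed.

Lemma flux_at_0_continuous t : 0 < t < T -> continuity_pt (fun s => a s * flux_diff s 0) t.
Proof.
  intros Ht. unfold flux_diff. apply C_mult; [apply Hac, Ht|].
  assert (C1 := C_of_D _ _ _ (sol_dt Hsol1 t 0 Ht)).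
  assert (C2 := C_of_D _ _ _ (sol_dt Hsol2 t 0 Ht)).
  apply C_minus.
  - apply (continuity_pt_ext (fun s => / 2 * (th1 s 0 * th1 s 0 - th2 s 0 * th2 s 0))).
    + intros; unfold Rdiv; ring.
    + apply C_scal, C_minus; apply C_mult; auto.
  - apply C_scal, C_minus; apply continuity_2d_pt_slice_t;
      [apply (sol_dx_cont Hsol1)|apply (sol_dx_cont Hsol2)]; exact Ht.
Qed.

Lemma flux_at_0_int_dt t : 0 < t < T ->
  derivable_pt_lim flux_at_0_int t (a t * flux_diff t 0).
Proof.
  intros Ht. unfold flux_at_0_int.
  apply (derivable_pt_lim_RInt_upper (fun s => a s * flux_diff s 0) (T / 2) t 0 T); try lra.
  intros; apply flux_at_0_continuous; auto.
Qed.

Lemma diff_potential_dt t x : 0 < t < T ->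
  derivable_pt_lim (fun s => diff_potential s x) t (a t * flux_diff t x).
Proof.
  intros Ht. unfold diff_potential.
  eapply D_val; [|apply D_plus; [apply diff_antider_dt|apply flux_at_0_int_dt]; exact Ht]. ring.
Qed.

Lemma diff_potential_dx t x : 0 < t < T ->
  derivable_pt_lim (diff_potential t) x (sol_diff t x).
Proof.
  intros Ht. unfold diff_potential.
  eapply D_val; [|apply D_plus; [apply diff_antider_dx, Ht|apply D_const]]. ring.
Qed.

Lemma diff_potential_subsolution sg M t1 t2 : 0 < t1 -> t2 < T ->
  subsolution_on t1 t2 nu M a sol_mean (fun t x => sg * diff_potential t x).
Proof.
  intros Ht1 Ht2.
  exists (fun t x => sg * (a t * flux_diff t x)), (fun t x => sg * sol_diff t x),
         (fun t x => sg * (dx1 t x - dx2 t x)).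
  repeat split.
  - intros t x Ht. apply D_scal, diff_potential_dt. lra.
  - intros t x Ht. apply D_scal, diff_potential_dx. lra.
  - intros t x Ht. apply D_scal, sol_diff_dx. lra.
  - intros t x Ht _. unfold flux_diff, sol_mean, sol_diff. right. field.
Qed.

Lemma diff_antider_bound t x : 0 < t < T -> Rabs (diff_antider t x) <= 2 * B * Rabs x.
Proof.
  intros Ht. apply Rabs_RInt_0_le.
  - apply ex_RInt_continuity_pt. intros; apply sol_diff_continuous_x, Ht.
  - intros; apply sol_diff_bound; lra.
Qed.

Lemma diff_antider_at_0 t : diff_antider t 0 = 0.
Proof. apply (RInt_point (V := R_CompleteNormedModule)). Qed.

Lemma sol_mean_bound t x : 0 <= t <= T -> Rabs (sol_mean t x) <= B.
Proof.
  intros Ht. unfold sol_mean. assert (H1 := Hb1 t x Ht). assert (H2 := Hb2 t x Ht).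
  apply Rabs_le_between in H1. apply Rabs_le_between in H2. apply Rabs_le. lra.
Qed.

Lemma flux_at_0_int_bounded t1 t2 : 0 < t1 -> t1 <= t2 -> t2 < T ->
  exists Dm, 0 <= Dm /\ forall t, t1 <= t <= t2 -> Rabs (flux_at_0_int t) <= Dm.
Proof.
  intros Ht1 Ht12 Ht2.
  destruct (continuity_ab_maj (fun t => Rabs (flux_at_0_int t)) t1 t2 Ht12) as [m [Hm _]].
  { intros c Hc. apply (continuity_pt_comp flux_at_0_int Rabs); [|apply Rcontinuity_abs].
    eapply C_of_D, flux_at_0_int_dt. lra. }
  exists (Rabs (flux_at_0_int m)). split; [apply Rabs_pos|exact Hm].
Qed.

Lemma diff_potential_continuous sg t1 t2 : 0 < t1 < t2 -> t2 < T ->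
  forall t x, continuity_2d_pt (fun t x => sg * diff_potential (clamp t1 t2 t) x) t x.
Proof.
  intros Ht12 Ht2 t x.
  apply (continuity_2d_pt_mult (fun _ _ => sg)); [apply continuity_2d_pt_const|].
  assert (Hin : forall s, 0 < clamp t1 t2 s < T) by (intros s; assert (H := clamp_in t1 t2 s); lra).
  apply (continuity_2d_pt_lipschitz_x _ (fun t x => sol_diff (clamp t1 t2 t) x) (2 * B)).
  - intros s y. apply diff_potential_dx, Hin.
  - intros s y. apply sol_diff_bound. assert (H := Hin s). lra.
  - intros s y. apply (continuity_pt_comp (clamp t1 t2) (fun s => diff_potential s y)).
    + apply continuity_pt_clamp. lra.
    + eapply C_of_D, diff_potential_dt, Hin.
Qed.

(** The maximum principle for [+- (V + int a F(., 0))] on [[t, t2]], at [x]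
    and at [0], where [V] vanishes. *)
Lemma signed_diff_antider_le sg t t2 c eps : sg * sg = 1 -> 0 < t < t2 -> t2 < T -> 0 < eps ->
  (forall y, Rabs (diff_antider t2 y) <= c + eps * (1 + y ^ 2)) ->
  forall x, sg * diff_antider t x <= 2 * c + eps * exp (mp_rate A B nu * T) * (2 + x ^ 2).
Proof.
  intros Hsg Ht Ht2 Heps Hend x.
  assert (HB := uniq_B_nonneg).
  destruct (flux_at_0_int_bounded t t2 ltac:(lra) ltac:(lra) Ht2) as [Dm [HDm HD]].
  assert (Hmp : forall s, s * s = 1 -> forall y,
    s * diff_potential t y - eps * exp (mp_rate A B nu * (t2 - t)) * (1 + y ^ 2)
      <= s * flux_at_0_int t2 + c).
  { intros s Hs y. assert (Hs' : Rabs s = 1).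
    { destruct (Rle_dec 0 s); [rewrite Rabs_pos_eq|rewrite Rabs_left]; nra. }
    apply (subsolution_le_penalized a sol_mean (fun t x => s * diff_potential t x)
             A B (2 * B + Dm) (s * flux_at_0_int t2 + c) nu t t2); try lra.
    - intros; apply Ha; lra.
    - intros; apply sol_mean_bound; lra.
    - intros t' x' Ht'. unfold diff_potential.
      rewrite Rabs_mult, Hs', Rmult_1_l. eapply Rle_trans; [apply Rabs_triang|].
      assert (H1 := diff_antider_bound t' x' ltac:(lra)). assert (H2 := HD t' Ht').
      assert (0 <= Rabs x') by apply Rabs_pos. nra.
    - apply diff_potential_continuous; lra.
    - apply diff_potential_subsolution; lra.
    - intros y'. unfold diff_potential. specialize (Hend y'). apply Rabs_le_between in Hend.
      destruct (Rle_dec 0 s); [replace s with 1 by nra|replace s with (-1) by nra]; lra. }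
  assert (H1 := Hmp sg Hsg x). assert (H2 := Hmp (- sg) ltac:(nra) 0).
  unfold diff_potential in H1, H2. rewrite diff_antider_at_0 in H2.
  assert (HE : exp (mp_rate A B nu * (t2 - t)) <= exp (mp_rate A B nu * T)).
  { apply exp_le_exp_of_le, Rmult_le_compat_l; [|lra].
    assert (0 < A) by (destruct (Ha 0); lra). unfold mp_rate. nra. }
  assert (0 <= x ^ 2) by apply pow2_ge_0.
  assert (eps * exp (mp_rate A B nu * (t2 - t)) * (2 + x ^ 2)
          <= eps * exp (mp_rate A B nu * T) * (2 + x ^ 2)).
  { apply Rmult_le_compat_r; [lra|]. apply Rmult_le_compat_l; lra. }
  nra.
Qed.

Lemma diff_antider_bounded_by_terminal t t2 c eps : 0 < t < t2 -> t2 < T -> 0 < eps ->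
  (forall y, Rabs (diff_antider t2 y) <= c + eps * (1 + y ^ 2)) ->
  forall x, Rabs (diff_antider t x) <= 2 * c + eps * exp (mp_rate A B nu * T) * (2 + x ^ 2).
Proof.
  intros Ht Ht2 Heps Hend x. apply Rabs_le.
  assert (H1 := signed_diff_antider_le 1 t t2 c eps ltac:(ring) Ht Ht2 Heps Hend x).
  assert (H2 := signed_diff_antider_le (-1) t t2 c eps ltac:(ring) Ht Ht2 Heps Hend x).
  lra.
Qed.

Lemma sol_diff_small_near_T e Y : 0 < e -> exists d, 0 < d /\
  forall t y, T - d < t <= T -> Rabs y <= Y -> Rabs (sol_diff t y) < e.
Proof.
  intros He.
  destruct (uniform_continuity_2d_around _ T T (- Y) (Rabs Y) (sol_cont Hsol1) (e / 2) ltac:(lra))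
    as [d1 [Hd1 H1]].
  destruct (uniform_continuity_2d_around _ T T (- Y) (Rabs Y) (sol_cont Hsol2) (e / 2) ltac:(lra))
    as [d2 [Hd2 H2]].
  exists (Rmin (Rmin d1 d2) T). split; [apply Rmin_pos; [apply Rmin_pos|]; lra|].
  intros t y Ht Hy.
  assert (Hd : Rabs (t - T) < d1 /\ Rabs (t - T) < d2 /\ 0 <= t).
  { rewrite Rabs_left1 by lra. unfold Rmin in Ht. repeat destruct Rle_dec; lra. }
  assert (HyY : - Y <= y <= Rabs Y).
  { apply Rabs_le_between in Hy. assert (Y <= Rabs Y) by apply RRle_abs. lra. }
  assert (Hy0 : forall d, 0 < d -> Rabs (y - y) < d)
    by (intros; rewrite Rminus_eq_0, Rabs_R0; auto).
  specialize (H1 T y t y ltac:(lra) HyY (proj1 Hd) (Hy0 d1 Hd1)).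
  specialize (H2 T y t y ltac:(lra) HyY (proj1 (proj2 Hd)) (Hy0 d2 Hd2)).
  rewrite !clamp_id in H1, H2 by lra.
  unfold sol_diff. rewrite <- (Hterm y) in H2.
  apply Rabs_def2 in H1. apply Rabs_def2 in H2. apply Rabs_def1; lra.
Qed.

(** Near [T], [|V| <= c] on [[-Y, Y]] by continuity, while outside [[-Y, Y]]
    the linear bound [|V| <= 2 B |y|] is absorbed by [eps y^2] once [eps Y >= 2 B]. *)
Lemma diff_antider_terminal_small t c eps : 0 < t < T -> 0 < c -> 0 < eps ->
  exists t2, t < t2 < T /\ forall y, Rabs (diff_antider t2 y) <= c + eps * (1 + y ^ 2).
Proof.
  intros Ht Hc Heps. assert (HB := uniq_B_nonneg).
  set (Y := 2 * B / eps).
  assert (HY : 0 <= Y) by (unfold Y; apply Rmult_le_pos; [lra|left; apply Rinv_0_lt_compat; lra]).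
  destruct (sol_diff_small_near_T (c / (Y + 1)) Y ltac:(apply Rdiv_lt_0_compat; lra))
    as [d [Hd Hnear]].
  set (t2 := (Rmax t (T - d / 2) + T) / 2).
  assert (Hmax : t <= Rmax t (T - d / 2) /\ T - d / 2 <= Rmax t (T - d / 2) /\
                 Rmax t (T - d / 2) < T)
    by (unfold Rmax; destruct Rle_dec; lra).
  exists t2. split; [unfold t2; lra|]. intros y.
  assert (0 <= y ^ 2) by apply pow2_ge_0.
  destruct (Rle_dec (Rabs y) Y) as [Hy|Hy].
  - assert (Hb : Rabs (diff_antider t2 y) <= c / (Y + 1) * Rabs y).
    { apply Rabs_RInt_0_le.
      - apply ex_RInt_continuity_pt. intros; apply sol_diff_continuous_x. unfold t2; lra.
      - intros z Hz. left. apply Hnear; [unfold t2; lra|].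
        assert (Rabs z <= Rabs y).
        { unfold Rmin, Rmax in Hz; destruct Rle_dec; unfold Rabs; repeat destruct Rcase_abs; lra. }
        lra. }
    assert (c / (Y + 1) * Rabs y <= c).
    { apply Rmult_le_reg_r with (Y + 1); [lra|].
      replace (c / (Y + 1) * Rabs y * (Y + 1)) with (c * Rabs y) by (field; lra).
      assert (0 <= Rabs y) by apply Rabs_pos. nra. }
    assert (0 <= eps * (1 + y ^ 2)) by (apply Rmult_le_pos; lra).
    lra.
  - assert (Hb := diff_antider_bound t2 y ltac:(unfold t2; lra)).
    assert (H2B : 2 * B = eps * Y) by (unfold Y; field; lra).
    assert (Ry : y ^ 2 = Rabs y * Rabs y) by (rewrite <- (pow2_abs y); ring).
    assert (2 * B * Rabs y <= eps * y ^ 2).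
    { rewrite H2B, Ry, Rmult_assoc. apply Rmult_le_compat_l; [lra|].
      apply Rmult_le_compat_r; [apply Rabs_pos|lra]. }
    assert (eps * (1 + y ^ 2) = eps + eps * y ^ 2) by ring.
    lra.
Qed.

Lemma diff_antider_zero t x : 0 < t < T -> diff_antider t x = 0.
Proof.
  intros Ht. apply Rabs_eq_0, Rle_antisym; [|apply Rabs_pos].
  apply Rle_plus_epsilon. intros e He. rewrite Rplus_0_l.
  set (K := exp (mp_rate A B nu * T) * (2 + x ^ 2)).
  assert (HK : 0 < K).
  { apply Rmult_lt_0_compat; [apply exp_pos|]. assert (0 <= x ^ 2) by apply pow2_ge_0. lra. }
  destruct (diff_antider_terminal_small t (e / 4) (e / (2 * K)) Ht ltac:(lra)
              ltac:(apply Rdiv_lt_0_compat; lra)) as [t2 [Ht2 Hend]].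
  assert (H := diff_antider_bounded_by_terminal t t2 (e / 4) (e / (2 * K)) ltac:(lra) ltac:(lra)
                 ltac:(apply Rdiv_lt_0_compat; lra) Hend x).
  replace (e / (2 * K) * exp (mp_rate A B nu * T) * (2 + x ^ 2)) with (e / (2 * K) * K) in H
    by (unfold K; ring).
  replace (e / (2 * K) * K) with (e / 2) in H by (field; lra).
  lra.
Qed.

Theorem uniqueness : forall t x, 0 <= t <= T -> th1 t x = th2 t x.
Proof.
  assert (Hint : forall t x, 0 < t < T -> th1 t x = th2 t x).
  { intros t x Ht.
    assert (Hd0 : derivable_pt_lim (diff_antider t) x 0).
    { apply (D_ext (fun _ => 0)); [intros; symmetry; apply diff_antider_zero, Ht|apply D_const]. }
    assert (H := uniqueness_limite _ _ _ _ (diff_antider_dx t x Ht) Hd0).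
    unfold sol_diff in H. lra. }
  intros t x Ht.
  destruct (Req_dec t 0) as [->|];
    [|destruct (Req_dec t T) as [->|]; [apply Hterm|apply Hint; lra]].
  set (g s := th1 (clamp 0 T s) x - th2 (clamp 0 T s) x).
  assert (Hc : continuity_pt g 0).
  { apply (continuity_2d_pt_slice_t (fun s x => th1 (clamp 0 T s) x - th2 (clamp 0 T s) x)).
    apply continuity_2d_pt_minus; [apply (sol_cont Hsol1)|apply (sol_cont Hsol2)]. }
  assert (Hg0 : g 0 = 0).
  { apply (eq_0_at_left_end g T HT Hc). intros t Ht'. unfold g. rewrite clamp_id by lra.
    destruct (Req_dec t T) as [->|]; [rewrite Hterm|rewrite Hint]; lra. }
  unfold g in Hg0. rewrite clamp_id in Hg0 by lra. lra.
Qed.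

End Uniqueness.

Lemma cont_on_interval_clamp (g : R -> R) T : 0 < T -> cont_on_interval g 0 T ->
  forall t, continuity_pt (fun t => g (clamp 0 T t)) t.
Proof.
  intros HT Hg t eps Heps.
  destruct (Hg (clamp 0 T t) (clamp_in 0 T t ltac:(lra)) eps Heps) as [d [Hd Hdd]].
  exists d; split; auto. intros y [_ Hy]. simpl in *. unfold R_dist in *.
  apply Hdd; [apply clamp_in; lra|].
  eapply Rle_lt_trans; [apply clamp_lipschitz; lra|exact Hy].
Qed.

(** The coefficients [a = w^-2] and [r] of the problem, extended to all of [R]
    through the continuous extension [eta (clamp 0 T t)] of [eta]. *)
Section Coefficients.
Variables (T kappa : R) (eta : R -> R).
Hypothesis HT : 0 < T.
Hypothesis Heta : cont_on_interval eta 0 T.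

Definition eta_ext t := eta (clamp 0 T t) - kappa.
Definition w_ext t := exp (RInt eta_ext t T).
Definition coef_a t := / w_ext t ^ 2.
Definition r_ext t := RInt coef_a t T.

Lemma eta_ext_continuous t : continuity_pt eta_ext t.
Proof. apply C_minus; [apply cont_on_interval_clamp; auto|apply C_const]. Qed.

Lemma coef_a_pos t : 0 < coef_a t.
Proof. apply Rinv_0_lt_compat, pow_lt, exp_pos. Qed.

Lemma coef_a_continuous t : continuity_pt coef_a t.
Proof.
  eapply C_of_D. unfold coef_a. apply D_inv.
  - apply pow_nonzero, Rgt_not_eq, exp_pos.
  - apply D_sq, D_exp, derivable_pt_lim_RInt_lower, eta_ext_continuous.
Qed.

Lemma r_ext_dt t : derivable_pt_lim r_ext t (- coef_a t).
Proof. apply derivable_pt_lim_RInt_lower, coef_a_continuous. Qed.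

Lemma r_ext_continuous t : continuity_pt r_ext t.
Proof. eapply C_of_D, r_ext_dt. Qed.

Lemma r_ext_T : r_ext T = 0.
Proof. apply (RInt_point (V := R_CompleteNormedModule)). Qed.

Lemma r_ext_decreasing t t' : t < t' -> r_ext t' < r_ext t.
Proof.
  intros H. destruct (MVT_cor2 r_ext (fun x => - coef_a x) t t' H) as [c [Hc _]].
  - intros; apply r_ext_dt.
  - assert (0 < coef_a c) by apply coef_a_pos. nra.
Qed.

Lemma r_ext_nonincreasing t t' : t <= t' -> r_ext t' <= r_ext t.
Proof.
  intros H. destruct (Req_dec t t') as [->|]; [lra|]. left; apply r_ext_decreasing; lra.
Qed.

Lemma coef_a_bounded : exists A, forall t, 0 <= t <= T -> 0 < coef_a t <= A.
Proof.
  destruct (continuity_ab_maj coef_a 0 T ltac:(lra) (fun c _ => coef_a_continuous c))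
    as [M [HM _]].
  exists (coef_a M). intros; split; [apply coef_a_pos|auto].
Qed.

Lemma w_fun_eq t : 0 <= t <= T -> w_fun T kappa eta t = w_ext t.
Proof.
  intros Ht. unfold w_fun, w_ext. f_equal.
  assert (Hext : forall x, Rmin t T < x < Rmax t T -> eta_ext x = eta x - kappa).
  { intros x Hx. unfold eta_ext. rewrite clamp_id; auto.
    unfold Rmin, Rmax in Hx; destruct Rle_dec; lra. }
  rewrite Defs_RInt_eq.
  - apply RInt_ext. intros; symmetry; auto.
  - eapply ex_RInt_ext; [exact Hext|].
    apply ex_RInt_continuity_pt. intros; apply eta_ext_continuous.
Qed.

Lemma coef_a_eq t : 0 <= t <= T -> / w_fun T kappa eta t ^ 2 = coef_a t.
Proof. intros; rewrite w_fun_eq; auto. Qed.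

Lemma r_fun_eq t : 0 <= t <= T -> r_fun T kappa eta t = r_ext t.
Proof.
  intros Ht. unfold r_fun, r_ext.
  assert (Hext : forall x, Rmin t T < x < Rmax t T -> coef_a x = / w_fun T kappa eta x ^ 2).
  { intros x Hx. rewrite coef_a_eq; auto. unfold Rmin, Rmax in Hx; destruct Rle_dec; lra. }
  rewrite Defs_RInt_eq.
  - apply RInt_ext. intros; symmetry; auto.
  - eapply ex_RInt_ext; [exact Hext|].
    apply ex_RInt_continuity_pt. intros; apply coef_a_continuous.
Qed.

End Coefficients.

Fixpoint lsum {A : Type} (L : list A) (f : A -> R) : R :=
  match L with nil => 0 | l :: L' => f l + lsum L' f end.

Section ListSums.
Context {A : Type}.
Implicit Types (L : list A) (f g : A -> R).

Lemma lsum_le L f g : (forall l, In l L -> f l <= g l) -> lsum L f <= lsum L g.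
Proof.
  induction L as [|l L IH]; simpl; intros H; [lra|].
  apply Rplus_le_compat; [apply H|apply IH]; auto.
Qed.

Lemma lsum_nonneg L f : (forall l, In l L -> 0 <= f l) -> 0 <= lsum L f.
Proof.
  intros H. apply Rle_trans with (lsum L (fun _ => 0)); [|apply lsum_le; auto].
  clear H; induction L; simpl; lra.
Qed.

Lemma lsum_ge_term L f l : In l L -> (forall l, In l L -> 0 <= f l) -> f l <= lsum L f.
Proof.
  induction L as [|l' L IH]; simpl; intros Hin H; [contradiction|].
  destruct Hin as [->|Hin].
  - assert (0 <= lsum L f) by (apply lsum_nonneg; auto). lra.
  - assert (0 <= f l') by auto. assert (f l <= lsum L f) by auto. lra.
Qed.

Lemma lsum_plus L f g : lsum L (fun l => f l + g l) = lsum L f + lsum L g.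
Proof. induction L; simpl; [ring|rewrite IHL; ring]. Qed.

Lemma lsum_scal L c f : lsum L (fun l => c * f l) = c * lsum L f.
Proof. induction L; simpl; [ring|rewrite IHL; ring]. Qed.

Lemma lsum_opp L f : lsum L (fun l => - f l) = - lsum L f.
Proof. induction L; simpl; [ring|rewrite IHL; ring]. Qed.

Lemma lsum_div L f c : 0 < c -> lsum L f / c = lsum L (fun l => f l / c).
Proof. intros Hc. induction L; simpl; [unfold Rdiv; ring|]. rewrite <- IHL. field; lra. Qed.

Lemma lsum_ext L f g : (forall l, In l L -> f l = g l) -> lsum L f = lsum L g.
Proof. induction L; simpl; intros H; auto. rewrite H, IHL; auto. Qed.

Lemma lsum_app L1 L2 f : lsum (L1 ++ L2) f = lsum L1 f + lsum L2 f.
Proof. induction L1; simpl; [ring|rewrite IHL1; ring]. Qed.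

Lemma lsum_le_length L f b : (forall l, In l L -> f l <= b) -> lsum L f <= INR (length L) * b.
Proof.
  induction L as [|l L IH]; cbn [lsum length]; intros H; [simpl; lra|].
  rewrite S_INR. assert (f l <= b) by (apply H; left; auto).
  assert (lsum L f <= INR (length L) * b) by (apply IH; intros; apply H; right; auto). lra.
Qed.

End ListSums.

(** * Hopf-Cole superpositions *)

(** A pair [l = (p, c)] stands for the affine solution [p x - p^2 s / 2 + c] of
    [phi_s + phi_x^2 / 2 = 0]; [exp (- phi / (2 nu))] then solves the heat
    equation [u_s = nu u_xx], and the Hopf-Cole transform
    [-2 nu (log sum u)_x = (sum p u) / (sum u)] of a finite superposition
    solves the viscous Burgers equation [Th_s + Th Th_x = nu Th_xx]. *)
Section HopfCole.
Variable nu : R.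
Hypothesis Hnu : 0 < nu.

Definition line_potential (l : R * R) s x := fst l * x - fst l ^ 2 * s / 2 + snd l.
Definition heat_weight (l : R * R) s x := exp (- line_potential l s x / (2 * nu)).
Definition moment k L s x := lsum L (fun l => fst l ^ k * heat_weight l s x).

Lemma heat_weight_pos l s x : 0 < heat_weight l s x.
Proof. apply exp_pos. Qed.

Lemma heat_weight_dx l s x :
  derivable_pt_lim (fun y => heat_weight l s y) x (- fst l / (2 * nu) * heat_weight l s x).
Proof.
  unfold heat_weight, line_potential. eapply D_val; [|apply D_exp].
  2: { apply (D_ext (fun y => (- fst l / (2 * nu)) * y
                              + (- (- fst l ^ 2 * s / 2 + snd l) / (2 * nu)))).
       - intros; field; lra.
       - apply D_affine. }
  reflexivity.
Qed.

Lemma heat_weight_ds l s x :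
  derivable_pt_lim (fun r => heat_weight l r x) s (fst l ^ 2 / (4 * nu) * heat_weight l s x).
Proof.
  unfold heat_weight, line_potential. eapply D_val; [|apply D_exp].
  2: { apply (D_ext (fun r => (fst l ^ 2 / (4 * nu)) * r + (- (fst l * x + snd l) / (2 * nu)))).
       - intros; field; lra.
       - apply D_affine. }
  reflexivity.
Qed.

Lemma moment_dx k L s x :
  derivable_pt_lim (fun y => moment k L s y) x (- moment (S k) L s x / (2 * nu)).
Proof.
  unfold moment. induction L as [|l L IH]; simpl.
  - eapply D_val; [|apply D_const]. field; lra.
  - eapply D_val; [|apply D_plus; [apply D_scal, heat_weight_dx|apply IH]].
    cbv beta; simpl; field; lra.
Qed.

Lemma moment_ds k L s x :
  derivable_pt_lim (fun r => moment k L r x) s (moment (S (S k)) L s x / (4 * nu)).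
Proof.
  unfold moment. induction L as [|l L IH]; simpl.
  - eapply D_val; [|apply D_const]. field; lra.
  - eapply D_val; [|apply D_plus; [apply D_scal, heat_weight_ds|apply IH]].
    cbv beta; simpl; field; lra.
Qed.

Lemma moment0_ge_weight L l s x : In l L -> heat_weight l s x <= moment 0 L s x.
Proof.
  intros Hin. unfold moment.
  replace (heat_weight l s x) with (fst l ^ 0 * heat_weight l s x) by (simpl; ring).
  apply (lsum_ge_term L (fun l => fst l ^ 0 * heat_weight l s x) l Hin).
  intros; simpl; rewrite Rmult_1_l; left; apply heat_weight_pos.
Qed.

Lemma moment0_pos L s x : L <> nil -> 0 < moment 0 L s x.
Proof.
  intros HL. destruct L as [|l L]; [congruence|].
  eapply Rlt_le_trans; [apply (heat_weight_pos l s x)|apply moment0_ge_weight; left; auto].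
Qed.

Definition hopf_cole L s x := moment 1 L s x / moment 0 L s x.

Definition hopf_cole_x L s x :=
  (moment 1 L s x ^ 2 - moment 0 L s x * moment 2 L s x) / (2 * nu * moment 0 L s x ^ 2).

Definition hopf_cole_s L s x :=
  (moment 3 L s x * moment 0 L s x - moment 1 L s x * moment 2 L s x)
  / (4 * nu * moment 0 L s x ^ 2).

Definition hopf_cole_xx L s x :=
  (moment 0 L s x * (moment 0 L s x * moment 3 L s x - moment 1 L s x * moment 2 L s x)
   + 2 * moment 1 L s x * (moment 1 L s x ^ 2 - moment 0 L s x * moment 2 L s x))
  / (4 * nu ^ 2 * moment 0 L s x ^ 3).

Section NonEmpty.
Variable L : list (R * R).
Hypothesis HL : L <> nil.

Lemma hopf_cole_dx s x : derivable_pt_lim (fun y => hopf_cole L s y) x (hopf_cole_x L s x).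
Proof.
  assert (H0 := moment0_pos L s x HL). unfold hopf_cole, hopf_cole_x.
  eapply D_val; [|apply D_div; [lra|apply moment_dx|apply moment_dx]]. field; lra.
Qed.

Lemma hopf_cole_x_dx s x : derivable_pt_lim (fun y => hopf_cole_x L s y) x (hopf_cole_xx L s x).
Proof.
  assert (H0 := moment0_pos L s x HL). unfold hopf_cole_x, hopf_cole_xx.
  assert (H2 : 0 < 2 * nu * moment 0 L s x ^ 2) by (apply Rmult_lt_0_compat; [|apply pow_lt]; lra).
  eapply D_val.
  2: { apply D_div; [lra| |].
       - apply D_minus; [apply D_sq, moment_dx|apply D_mult; apply moment_dx].
       - apply D_scal, (D_ext (fun y => moment 0 L s y * moment 0 L s y)); [intros; ring|].
         apply D_mult; apply moment_dx. }
  simpl. field. lra.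
Qed.

Lemma hopf_cole_ds s x : derivable_pt_lim (fun r => hopf_cole L r x) s (hopf_cole_s L s x).
Proof.
  assert (H0 := moment0_pos L s x HL). unfold hopf_cole, hopf_cole_s.
  eapply D_val; [|apply D_div; [lra|apply moment_ds|apply moment_ds]]. cbv beta. field; lra.
Qed.

Lemma hopf_cole_burgers s x :
  hopf_cole_s L s x + hopf_cole L s x * hopf_cole_x L s x - nu * hopf_cole_xx L s x = 0.
Proof.
  assert (H0 := moment0_pos L s x HL).
  unfold hopf_cole_s, hopf_cole, hopf_cole_x, hopf_cole_xx. field. lra.
Qed.

End NonEmpty.

Definition rel_weight l l0 s x := exp (- (line_potential l s x - line_potential l0 s x) / (2 * nu)).

Lemma heat_weight_ratio l l0 s x : heat_weight l s x / heat_weight l0 s x = rel_weight l l0 s x.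
Proof.
  unfold heat_weight, rel_weight, Rdiv. rewrite <- exp_Ropp, <- exp_plus. f_equal. field. lra.
Qed.

Lemma hopf_cole_plus_1_le L l0 s x : In l0 L -> fst l0 = -1 ->
  (forall l, In l L -> -1 <= fst l) ->
  hopf_cole L s x + 1 <= lsum L (fun l => (fst l + 1) * rel_weight l l0 s x).
Proof.
  intros Hin Hl0 Hall.
  assert (HL : L <> nil) by (intro; subst; contradiction).
  assert (H0 := moment0_pos L s x HL).
  assert (Hge := moment0_ge_weight L l0 s x Hin). assert (Hw0 := heat_weight_pos l0 s x).
  replace (hopf_cole L s x + 1)
    with (lsum L (fun l => (fst l + 1) * heat_weight l s x) / moment 0 L s x).
  2: { replace (lsum L (fun l => (fst l + 1) * heat_weight l s x))
         with (moment 1 L s x + moment 0 L s x).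
       - unfold hopf_cole. field; lra.
       - unfold moment. rewrite <- lsum_plus. apply lsum_ext. intros; simpl; ring. }
  rewrite lsum_div by lra. apply lsum_le. intros l Hl.
  rewrite <- heat_weight_ratio. assert (0 <= fst l + 1) by (specialize (Hall l Hl); lra).
  assert (Hw := heat_weight_pos l s x).
  unfold Rdiv. rewrite <- Rmult_assoc. apply Rmult_le_compat_l; [apply Rmult_le_pos; lra|].
  apply Rinv_le_contravar; lra.
Qed.

Lemma hopf_cole_ge L l0 s x : In l0 L ->
  fst l0 - lsum L (fun l => Rmax 0 (fst l0 - fst l) * rel_weight l l0 s x) <= hopf_cole L s x.
Proof.
  intros Hin.
  assert (HL : L <> nil) by (intro; subst; contradiction).
  assert (H0 := moment0_pos L s x HL).
  assert (Hge := moment0_ge_weight L l0 s x Hin). assert (Hw0 := heat_weight_pos l0 s x).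
  assert (E : hopf_cole L s x - fst l0
              = lsum L (fun l => (fst l - fst l0) * heat_weight l s x) / moment 0 L s x).
  { replace (lsum L (fun l => (fst l - fst l0) * heat_weight l s x))
      with (moment 1 L s x - fst l0 * moment 0 L s x).
    - unfold hopf_cole. field; lra.
    - unfold moment, Rminus. rewrite <- lsum_scal, <- lsum_opp, <- lsum_plus.
      apply lsum_ext; intros; simpl; ring. }
  cut (- lsum L (fun l => Rmax 0 (fst l0 - fst l) * rel_weight l l0 s x)
       <= hopf_cole L s x - fst l0); [lra|].
  rewrite E, lsum_div, <- lsum_opp by lra.
  apply lsum_le. intros l Hl. rewrite <- heat_weight_ratio.
  assert (Hw := heat_weight_pos l s x).
  destruct (Rle_dec (fst l0) (fst l)) as [Hle|Hlt].
  - rewrite Rmax_left by lra.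
    assert (0 <= (fst l - fst l0) * heat_weight l s x / moment 0 L s x)
      by (apply Rmult_le_pos; [apply Rmult_le_pos|left; apply Rinv_0_lt_compat]; lra).
    lra.
  - rewrite Rmax_right by lra.
    assert (heat_weight l s x / moment 0 L s x <= heat_weight l s x / heat_weight l0 s x).
    { unfold Rdiv. apply Rmult_le_compat_l; [lra|]. apply Rinv_le_contravar; lra. }
    replace ((fst l - fst l0) * heat_weight l s x / moment 0 L s x)
      with (- ((fst l0 - fst l) * (heat_weight l s x / moment 0 L s x))) by (field; lra).
    apply Ropp_le_contravar, Rmult_le_compat_l; lra.
Qed.

Lemma moment_bounds L s x : (forall l, In l L -> -1 <= fst l <= 1) ->
  Rabs (moment 1 L s x) <= moment 0 L s x /\ 0 <= moment 2 L s x <= moment 0 L s x.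
Proof.
  intros Hall. unfold moment. induction L as [|l L IH]; simpl.
  - rewrite Rabs_R0; lra.
  - destruct IH as [IH1 IH2]; [intros; apply Hall; right; auto|]. simpl in IH1, IH2.
    assert (Hl := Hall l (or_introl eq_refl)). assert (Hw := heat_weight_pos l s x).
    split.
    + eapply Rle_trans; [apply Rabs_triang|].
      rewrite Rabs_mult, (Rabs_pos_eq (heat_weight l s x)), Rmult_1_r by lra.
      assert (Rabs (fst l) * heat_weight l s x <= 1 * heat_weight l s x)
        by (apply Rmult_le_compat_r; [lra|apply Rabs_le; lra]).
      lra.
    + assert (0 <= fst l * (fst l * 1) <= 1) by nra. nra.
Qed.

Lemma Rabs_hopf_cole_le_1 L s x : L <> nil -> (forall l, In l L -> -1 <= fst l <= 1) ->
  Rabs (hopf_cole L s x) <= 1.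
Proof.
  intros HL Hall. destruct (moment_bounds L s x Hall) as [H1 _].
  assert (H0 := moment0_pos L s x HL).
  unfold hopf_cole, Rdiv.
  rewrite Rabs_mult, (Rabs_pos_eq (/ _)) by (left; apply Rinv_0_lt_compat; lra).
  apply Rmult_le_reg_r with (moment 0 L s x); auto. rewrite Rmult_assoc, Rinv_l by lra. lra.
Qed.

Lemma hopf_cole_x_bounds L s x : L <> nil -> (forall l, In l L -> -1 <= fst l <= 1) ->
  - (1 / (2 * nu)) <= hopf_cole_x L s x <= 1 / (2 * nu).
Proof.
  intros HL Hall. destruct (moment_bounds L s x Hall) as [H1 H2].
  assert (H0 := moment0_pos L s x HL).
  assert (Hsq : moment 1 L s x ^ 2 <= moment 0 L s x ^ 2).
  { rewrite <- (pow2_abs (moment 1 L s x)). apply pow_incr. split; [apply Rabs_pos|auto]. }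
  assert (0 <= moment 1 L s x ^ 2) by apply pow2_ge_0.
  assert (Hd : 0 < 2 * nu * moment 0 L s x ^ 2) by (apply Rmult_lt_0_compat; [|apply pow_lt]; lra).
  unfold hopf_cole_x. split.
  - replace (- (1 / (2 * nu))) with ((- moment 0 L s x ^ 2) / (2 * nu * moment 0 L s x ^ 2))
      by (field; lra).
    unfold Rdiv. apply Rmult_le_compat_r; [left; apply Rinv_0_lt_compat; auto|].
    assert (moment 0 L s x * moment 2 L s x <= moment 0 L s x * moment 0 L s x)
      by (apply Rmult_le_compat_l; lra).
    simpl in *. lra.
  - replace (1 / (2 * nu)) with ((moment 0 L s x ^ 2) / (2 * nu * moment 0 L s x ^ 2))
      by (field; lra).
    unfold Rdiv. apply Rmult_le_compat_r; [left; apply Rinv_0_lt_compat; auto|].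
    assert (0 <= moment 0 L s x * moment 2 L s x) by (apply Rmult_le_pos; lra). lra.
Qed.

Lemma hopf_cole_x_ge L l0 s x : In l0 L -> (forall l, In l L -> -1 <= fst l <= 1) ->
  - (1 / (2 * nu)) * lsum L (fun l => fst l ^ 2 * rel_weight l l0 s x) <= hopf_cole_x L s x.
Proof.
  intros Hin Hall.
  assert (HL : L <> nil) by (intro; subst; contradiction).
  destruct (moment_bounds L s x Hall) as [H1 H2]. assert (H0 := moment0_pos L s x HL).
  assert (Hge := moment0_ge_weight L l0 s x Hin). assert (Hw0 := heat_weight_pos l0 s x).
  assert (Hd : 0 < 2 * nu * moment 0 L s x ^ 2) by (apply Rmult_lt_0_compat; [|apply pow_lt]; lra).
  assert (S1 : lsum L (fun l => fst l ^ 2 * rel_weight l l0 s x)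
               = moment 2 L s x / heat_weight l0 s x).
  { unfold moment. rewrite lsum_div by lra. apply lsum_ext. intros l _.
    rewrite <- heat_weight_ratio. unfold Rdiv; ring. }
  rewrite S1.
  assert (Hm : moment 2 L s x / moment 0 L s x <= moment 2 L s x / heat_weight l0 s x).
  { unfold Rdiv. apply Rmult_le_compat_l; [lra|]. apply Rinv_le_contravar; lra. }
  assert (- (1 / (2 * nu)) * (moment 2 L s x / moment 0 L s x) <= hopf_cole_x L s x).
  { unfold hopf_cole_x.
    replace (- (1 / (2 * nu)) * (moment 2 L s x / moment 0 L s x))
      with ((- (moment 0 L s x * moment 2 L s x)) / (2 * nu * moment 0 L s x ^ 2)) by (field; lra).
    unfold Rdiv. apply Rmult_le_compat_r; [left; apply Rinv_0_lt_compat; auto|].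
    assert (0 <= moment 1 L s x ^ 2) by apply pow2_ge_0. lra. }
  assert (0 < 1 / (2 * nu)) by (apply Rdiv_lt_0_compat; lra).
  assert (1 / (2 * nu) * (moment 2 L s x / moment 0 L s x)
          <= 1 / (2 * nu) * (moment 2 L s x / heat_weight l0 s x))
    by (apply Rmult_le_compat_l; lra).
  lra.
Qed.

End HopfCole.

(** * The barrier *)

(** Lines of slopes [+- j / n] whose offsets [~ p^2 RR / 2] make the inviscid
    minimum over the lines follow the rarefaction fan [- x / (RR - s)]; the
    shift [p q RR] of the offsets lifts the barrier above the terminal data. *)
Section Barrier.
Variables (nu RR : R) (n : nat).
Hypothesis Hnu : 0 < nu.
Hypothesis HR : 0 < RR.
Hypothesis Hn : (2 <= n)%nat.

Definition fan_step := / INR n.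
Definition fan_slope (j : nat) := INR j * fan_step.
Definition fan_offset (j : nat) := fan_slope j * (fan_slope j + 2 * fan_step) * RR / 2.
Definition neg_line (j : nat) := (- fan_slope j, fan_offset j).
Definition pos_line (j : nat) := (fan_slope j, fan_offset j).
Definition fan_lines := map neg_line (seq 0 (S n)) ++ map pos_line (seq 1 n).

Lemma INR_n_ge_2 : 2 <= INR n.
Proof. replace 2 with (INR 2) by (simpl; ring). apply le_INR; auto. Qed.

Lemma fan_step_pos : 0 < fan_step.
Proof. unfold fan_step. apply Rinv_0_lt_compat. assert (H := INR_n_ge_2). lra. Qed.

Lemma fan_step_le_half : fan_step <= 1 / 2.
Proof.
  unfold fan_step. replace (1 / 2) with (/ 2) by field.
  apply Rinv_le_contravar; [lra|apply INR_n_ge_2].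
Qed.

Lemma fan_slope_n : fan_slope n = 1.
Proof. unfold fan_slope, fan_step. field. assert (H := INR_n_ge_2). lra. Qed.

Lemma fan_slope_0 : fan_slope 0 = 0.
Proof. unfold fan_slope. simpl. ring. Qed.

Lemma fan_slope_range j : (j <= n)%nat -> 0 <= fan_slope j <= 1.
Proof.
  intros Hj. rewrite <- fan_slope_n. unfold fan_slope. assert (Hq := fan_step_pos). split.
  - apply Rmult_le_pos; [apply pos_INR|lra].
  - apply Rmult_le_compat_r; [lra|apply le_INR; auto].
Qed.

Lemma fan_slope_lt j : (j < n)%nat -> fan_slope j <= 1 - fan_step.
Proof.
  intros Hj. assert (Hq := fan_step_pos).
  assert (H : INR j <= INR n - 1).
  { replace (INR n - 1) with (INR (n - 1)) by (rewrite minus_INR by lia; simpl; ring).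
    apply le_INR; lia. }
  replace (1 - fan_step) with ((INR n - 1) * fan_step)
    by (unfold fan_step; field; assert (H2 := INR_n_ge_2); lra).
  unfold fan_slope. apply Rmult_le_compat_r; lra.
Qed.

Lemma fan_slope_ge_step j : (1 <= j)%nat -> fan_step <= fan_slope j.
Proof.
  intros Hj. unfold fan_slope. assert (Hq := fan_step_pos).
  rewrite <- (Rmult_1_l fan_step) at 1.
  apply Rmult_le_compat_r; [lra|]. apply (le_INR 1); auto.
Qed.

Lemma fan_slope_gap j k : (k < j)%nat -> fan_slope k + fan_step <= fan_slope j.
Proof.
  intros H. unfold fan_slope.
  replace (INR k * fan_step + fan_step) with (INR (S k) * fan_step) by (rewrite S_INR; ring).
  apply Rmult_le_compat_r; [left; apply fan_step_pos|]. apply le_INR; lia.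
Qed.

Lemma fan_offset_n : fan_offset n = (1 + 2 * fan_step) * RR / 2.
Proof. unfold fan_offset. rewrite fan_slope_n. field. Qed.

Lemma fan_offset_0 : fan_offset 0 = 0.
Proof. unfold fan_offset. rewrite fan_slope_0. field. Qed.

Lemma fst_neg_line j : fst (neg_line j) = - fan_slope j.
Proof. reflexivity. Qed.

Lemma fst_pos_line j : fst (pos_line j) = fan_slope j.
Proof. reflexivity. Qed.

Lemma fan_lines_in l : In l fan_lines ->
  (exists j, (j <= n)%nat /\ l = neg_line j) \/ (exists j, (1 <= j <= n)%nat /\ l = pos_line j).
Proof.
  unfold fan_lines. intros H. apply in_app_or in H.
  destruct H as [H|H]; [left|right]; apply in_map_iff in H; destruct H as [j [<- Hj]];
    apply in_seq in Hj; exists j; split; auto; lia.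
Qed.

Lemma neg_line_in j : (j <= n)%nat -> In (neg_line j) fan_lines.
Proof. intros. unfold fan_lines. apply in_or_app. left. apply in_map. apply in_seq. lia. Qed.

Lemma fan_lines_length : length fan_lines = (2 * n + 1)%nat.
Proof. unfold fan_lines. rewrite length_app, !length_map, !length_seq. lia. Qed.

Lemma fan_lines_nonnil : fan_lines <> nil.
Proof. intro H. assert (Hl := fan_lines_length). rewrite H in Hl. simpl in Hl. lia. Qed.

Lemma fan_lines_slope l : In l fan_lines -> -1 <= fst l <= 1.
Proof.
  intros H. destruct (fan_lines_in l H) as [[j [Hj ->]]|[j [Hj ->]]]; simpl;
    assert (Hr := fan_slope_range j ltac:(lia)); lra.
Qed.

Lemma moment1_fan_at_0 s : moment nu 1 fan_lines s 0 = 0.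
Proof.
  unfold moment, fan_lines. rewrite lsum_app. cbn [seq map lsum].
  unfold neg_line at 1. cbn [fst]. rewrite fan_slope_0.
  (* the lines of slopes [- p] and [p] have the same weight at [x = 0] *)
  assert (H : forall js, lsum (map neg_line js) (fun l => fst l ^ 1 * heat_weight nu l s 0)
                         + lsum (map pos_line js) (fun l => fst l ^ 1 * heat_weight nu l s 0) = 0).
  { induction js as [|j js IH]; cbn [map lsum]; [ring|].
    assert (E : heat_weight nu (neg_line j) s 0 = heat_weight nu (pos_line j) s 0).
    { unfold heat_weight, line_potential, neg_line, pos_line. cbn [fst snd]. f_equal. field. lra. }
    assert (fst (neg_line j) ^ 1 * heat_weight nu (neg_line j) s 0
            + fst (pos_line j) ^ 1 * heat_weight nu (pos_line j) s 0 = 0)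
      by (rewrite E; unfold neg_line, pos_line; cbn [fst]; ring).
    lra. }
  specialize (H (seq 1 n)). lra.
Qed.

Lemma hopf_cole_fan_at_0 s : hopf_cole nu fan_lines s 0 = 0.
Proof. unfold hopf_cole. rewrite moment1_fan_at_0. unfold Rdiv; ring. Qed.

Definition steepest_line := neg_line n.

Lemma steepest_line_slope : fst steepest_line = -1.
Proof. unfold steepest_line, neg_line; simpl. rewrite fan_slope_n; ring. Qed.

Lemma line_gap_neg_line j s x :
  line_potential (neg_line j) s x - line_potential steepest_line s x
  = (1 - fan_slope j) * (x - (1 + fan_slope j) * (RR - s) / 2 - RR * fan_step).
Proof.
  unfold line_potential, steepest_line, neg_line; simpl.
  rewrite fan_offset_n, fan_slope_n. unfold fan_offset. field.
Qed.

Lemma line_gap_pos_line j s x :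
  line_potential (pos_line j) s x - line_potential steepest_line s x
  = (1 + fan_slope j) * x - (1 - fan_slope j) * ((1 + fan_slope j) * (RR - s) / 2 + RR * fan_step).
Proof.
  unfold line_potential, steepest_line, pos_line, neg_line; simpl.
  rewrite fan_offset_n, fan_slope_n. unfold fan_offset. field.
Qed.

Lemma exp_neg_le a b : b <= a -> exp (- a / (2 * nu)) <= exp (- b / (2 * nu)).
Proof.
  intros Hab. apply exp_le_exp_of_le. unfold Rdiv.
  apply Rmult_le_compat_r; [left; apply Rinv_0_lt_compat|]; lra.
Qed.

(** ** Upper bounds: the barrier is close to [-1] right of the fan *)

Definition steepest_gap l s x := line_potential l s x - line_potential steepest_line s x.

Lemma barrier_le_of_terms s x E :
  (forall l, In l fan_lines -> (fst l + 1) * rel_weight nu l steepest_line s x <= E) ->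
  hopf_cole nu fan_lines s x <= -1 + INR (2 * n + 1) * E.
Proof.
  intros Hterm.
  assert (H := hopf_cole_plus_1_le nu Hnu fan_lines steepest_line s x (neg_line_in n (le_n n))
                 steepest_line_slope (fun l Hl => proj1 (fan_lines_slope l Hl))).
  assert (Hs := lsum_le_length fan_lines _ E Hterm).
  rewrite fan_lines_length in Hs. lra.
Qed.

Lemma fan_term_le l s x G : In l fan_lines ->
  (fst l <> -1 -> G <= steepest_gap l s x) ->
  (fst l + 1) * rel_weight nu l steepest_line s x <= 2 * exp (- G / (2 * nu)).
Proof.
  intros Hl HG. unfold rel_weight. fold (steepest_gap l s x). assert (Hp := fan_lines_slope l Hl).
  assert (HE := exp_pos (- G / (2 * nu))).
  destruct (Req_dec (fst l) (-1)) as [E|E].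
  - rewrite E. lra.
  - apply Rmult_le_compat; [lra|left; apply exp_pos|lra|apply exp_neg_le, HG, E].
Qed.

Lemma neg_line_gap_outside_fan m0 j s x : (j < n)%nat -> RR * fan_step <= m0 / 2 -> 0 < m0 ->
  Rmax (RR - s) 0 + m0 <= x -> fan_step * m0 / 2 <= steepest_gap (neg_line j) s x.
Proof.
  intros Hj Hq Hm0 Hx. unfold steepest_gap. rewrite line_gap_neg_line.
  assert (Hp := fan_slope_lt j Hj). assert (Hp0 := fan_slope_range j ltac:(lia)).
  assert (Hstep := fan_step_pos).
  assert (RR - s <= Rmax (RR - s) 0 /\ 0 <= Rmax (RR - s) 0) as [H1 H2]
    by (unfold Rmax; destruct Rle_dec; lra).
  assert ((1 + fan_slope j) * (RR - s) / 2 <= Rmax (RR - s) 0)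
    by (destruct (Rle_dec 0 (RR - s)); nra).
  replace (fan_step * m0 / 2) with (fan_step * (m0 / 2)) by field.
  apply Rle_trans with (fan_step * (x - (1 + fan_slope j) * (RR - s) / 2 - RR * fan_step)).
  - apply Rmult_le_compat_l; lra.
  - apply Rmult_le_compat_r; lra.
Qed.

Lemma pos_line_gap_outside_fan m0 j s x : (1 <= j <= n)%nat -> RR * fan_step <= m0 / 2 ->
  0 < m0 -> Rmax (RR - s) 0 + m0 <= x -> fan_step * m0 / 2 <= steepest_gap (pos_line j) s x.
Proof.
  intros Hj Hq Hm0 Hx. unfold steepest_gap. rewrite line_gap_pos_line.
  assert (Hp := fan_slope_range j ltac:(lia)).
  assert (Hstep := fan_step_pos). assert (Hhalf := fan_step_le_half).
  assert (RR - s <= Rmax (RR - s) 0 /\ 0 <= Rmax (RR - s) 0) as [H1 H2]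
    by (unfold Rmax; destruct Rle_dec; lra).
  assert (Hprod : 0 <= (1 - fan_slope j) * (1 + fan_slope j) / 2 <= 1) by nra.
  assert (Hfan : (1 - fan_slope j) * ((1 + fan_slope j) * (RR - s) / 2 + RR * fan_step)
                 <= Rmax (RR - s) 0 + RR * fan_step).
  { replace ((1 - fan_slope j) * ((1 + fan_slope j) * (RR - s) / 2 + RR * fan_step))
      with ((1 - fan_slope j) * (1 + fan_slope j) / 2 * (RR - s)
            + (1 - fan_slope j) * (RR * fan_step)) by field.
    assert (0 <= fan_slope j * (RR * fan_step)) by (apply Rmult_le_pos; nra).
    destruct (Rle_dec 0 (RR - s)); nra. }
  assert (x <= (1 + fan_slope j) * x) by nra.
  assert (fan_step * m0 / 2 <= m0 / 2) by nra.
  lra.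
Qed.

Lemma barrier_le_outside_fan m0 s x : RR * fan_step <= m0 / 2 -> 0 < m0 ->
  Rmax (RR - s) 0 + m0 <= x ->
  hopf_cole nu fan_lines s x <= -1 + INR (2 * n + 1) * (2 * exp (- (fan_step * m0 / 2) / (2 * nu))).
Proof.
  intros Hq Hm0 Hx. apply barrier_le_of_terms. intros l Hl.
  apply fan_term_le; [exact Hl|]. intros Hl1.
  destruct (fan_lines_in l Hl) as [[j [Hj ->]]|[j [Hj ->]]].
  - apply neg_line_gap_outside_fan; auto.
    destruct (Nat.eq_dec j n) as [->|]; [|lia].
    exfalso. apply Hl1, steepest_line_slope.
  - apply pos_line_gap_outside_fan; auto.
Qed.

Lemma neg_line_gap_before_fan gam j s x : (j < n)%nat -> RR * fan_step <= gam / 4 ->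
  0 < gam -> RR + gam <= s -> 0 <= x -> fan_step * gam / 4 <= steepest_gap (neg_line j) s x.
Proof.
  intros Hj Hq Hg Hs Hx. unfold steepest_gap. rewrite line_gap_neg_line.
  assert (Hp := fan_slope_lt j Hj). assert (Hp0 := fan_slope_range j ltac:(lia)).
  assert (Hstep := fan_step_pos).
  assert (gam / 4 <= x - (1 + fan_slope j) * (RR - s) / 2 - RR * fan_step) by nra.
  replace (fan_step * gam / 4) with (fan_step * (gam / 4)) by field.
  apply Rle_trans with (fan_step * (x - (1 + fan_slope j) * (RR - s) / 2 - RR * fan_step)).
  - apply Rmult_le_compat_l; lra.
  - apply Rmult_le_compat_r; lra.
Qed.

Lemma pos_line_gap_before_fan gam j s x : (j < n)%nat -> RR * fan_step <= gam / 4 ->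
  0 < gam -> RR + gam <= s -> 0 <= x -> fan_step * gam / 4 <= steepest_gap (pos_line j) s x.
Proof.
  intros Hj Hq Hg Hs Hx. unfold steepest_gap. rewrite line_gap_pos_line.
  assert (Hp := fan_slope_lt j Hj). assert (Hp0 := fan_slope_range j ltac:(lia)).
  assert (Hstep := fan_step_pos).
  assert ((1 + fan_slope j) * (RR - s) / 2 + RR * fan_step <= - gam / 4) by nra.
  assert (0 <= (1 + fan_slope j) * x) by nra.
  assert (fan_step * (gam / 4) <= (1 - fan_slope j) * (gam / 4)) by nra.
  nra.
Qed.

Lemma barrier_le_before_fan gam s x : RR * fan_step <= gam / 4 -> 0 < gam -> RR + gam <= s ->
  0 <= x -> hopf_cole nu fan_lines s x <=
    -1 + INR (2 * n + 1) * (2 * (exp (- (fan_step * gam / 4) / (2 * nu)) + exp (- x / nu))).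
Proof.
  intros Hq Hg Hs Hx. apply barrier_le_of_terms. intros l Hl.
  assert (He1 := exp_pos (- (fan_step * gam / 4) / (2 * nu))). assert (He2 := exp_pos (- x / nu)).
  destruct (fan_lines_in l Hl) as [[j [Hj ->]]|[j [Hj ->]]].
  - eapply Rle_trans; [apply (fan_term_le _ s x (fan_step * gam / 4)); [exact Hl|]|lra].
    intros Hl1. apply neg_line_gap_before_fan; auto.
    destruct (Nat.eq_dec j n) as [->|]; [|lia].
    exfalso. apply Hl1, steepest_line_slope.
  - destruct (Nat.eq_dec j n) as [->|Hjn].
    + (* the line of slope [+1] is [2 x] above the steepest one *)
      eapply Rle_trans; [apply (fan_term_le _ s x (2 * x)); [exact Hl|]|].
      * intros _. unfold steepest_gap. rewrite line_gap_pos_line, fan_slope_n. lra.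
      * replace (- (2 * x) / (2 * nu)) with (- x / nu) by (field; lra). lra.
    + eapply Rle_trans; [apply (fan_term_le _ s x (fan_step * gam / 4)); [exact Hl|]|lra].
      intros _. apply pos_line_gap_before_fan; auto. lia.
Qed.

(** ** Lower bound at the terminal time: the barrier lies above [- x / RR] *)

Definition fan_tail := exp (- (RR * fan_step ^ 2 / 4) / (2 * nu)).

Lemma line_potential_flat_line y : line_potential (neg_line 0) 0 y = 0.
Proof.
  unfold line_potential, neg_line; cbn [fst snd]. rewrite fan_slope_0, fan_offset_0. field.
Qed.

Lemma line_potential_terminal_ge l y : In l fan_lines -> fst l <> 0 ->
  0 <= y <= 5 * RR * fan_step / 4 -> RR * fan_step ^ 2 / 4 <= line_potential l 0 y.
Proof.
  intros Hl Hl0 Hy. assert (Hq := fan_step_pos).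
  destruct (fan_lines_in l Hl) as [[j [Hj ->]]|[j [Hj ->]]];
    unfold line_potential, neg_line, pos_line, fan_offset in *; cbn [fst snd] in *.
  - assert (Hj1 : (1 <= j)%nat) by (destruct j; [rewrite fan_slope_0 in Hl0; lra|lia]).
    assert (H1 := fan_slope_ge_step j Hj1).
    assert ((fan_slope j + 2 * fan_step) * RR / 2 - y >= RR * fan_step / 4) by nra.
    nra.
  - assert (H1 := fan_slope_ge_step j ltac:(lia)).
    assert ((fan_slope j + 2 * fan_step) * RR / 2 >= RR * fan_step / 4) by nra.
    nra.
Qed.

Lemma hopf_cole_x_terminal_ge y : 0 <= y <= 5 * RR * fan_step / 4 ->
  INR (2 * n + 1) * (1 / (2 * nu)) * fan_tail <= 1 / RR ->
  - (1 / RR) <= hopf_cole_x nu fan_lines 0 y.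
Proof.
  intros Hy Hc.
  assert (H := hopf_cole_x_ge nu Hnu fan_lines (neg_line 0) 0 y (neg_line_in 0 ltac:(lia))
                 fan_lines_slope).
  assert (Hs : lsum fan_lines (fun l => fst l ^ 2 * rel_weight nu l (neg_line 0) 0 y)
               <= INR (length fan_lines) * fan_tail).
  { apply lsum_le_length. intros l Hl. assert (Hp := fan_lines_slope l Hl).
    destruct (Req_dec (fst l) 0) as [E|E].
    - rewrite E. assert (0 < fan_tail) by apply exp_pos. lra.
    - rewrite <- (Rmult_1_l fan_tail).
      apply Rmult_le_compat; [apply pow2_ge_0|left; apply exp_pos|nra|].
      unfold rel_weight. rewrite line_potential_flat_line, Rminus_0_r.
      apply exp_neg_le, line_potential_terminal_ge; auto. }
  rewrite fan_lines_length in Hs.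
  assert (0 < 1 / (2 * nu)) by (apply Rdiv_lt_0_compat; lra).
  assert (1 / (2 * nu) * lsum fan_lines (fun l => fst l ^ 2 * rel_weight nu l (neg_line 0) 0 y)
          <= 1 / (2 * nu) * (INR (2 * n + 1) * fan_tail)) by (apply Rmult_le_compat_l; lra).
  lra.
Qed.

Lemma barrier_terminal_ge_near_0 x : 0 <= x <= 5 * RR * fan_step / 4 ->
  INR (2 * n + 1) * (1 / (2 * nu)) * fan_tail <= 1 / RR -> - x / RR <= hopf_cole nu fan_lines 0 x.
Proof.
  intros Hx Hc.
  destruct (Req_dec x 0) as [->|Hx0]; [rewrite hopf_cole_fan_at_0; unfold Rdiv; lra|].
  destruct (MVT_cor2 (fun y => hopf_cole nu fan_lines 0 y)
                     (fun y => hopf_cole_x nu fan_lines 0 y) 0 x)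
    as [c [Hc1 Hc2]]; [lra|intros; apply hopf_cole_dx; auto; apply fan_lines_nonnil|].
  rewrite hopf_cole_fan_at_0 in Hc1. assert (H := hopf_cole_x_terminal_ge c ltac:(lra) Hc).
  assert (hopf_cole_x nu fan_lines 0 c * (x - 0) >= - (1 / RR) * x) by nra.
  unfold Rdiv in *. lra.
Qed.

Lemma neg_line_gap_terminal j k x : (k < j <= n)%nat ->
  x <= (INR k + 5 / 4) * RR * fan_step ->
  RR * fan_step ^ 2 / 4 <= line_potential (neg_line j) 0 x - line_potential (neg_line k) 0 x.
Proof.
  intros Hjk Hx. assert (Hq := fan_step_pos).
  assert (Hst := fan_slope_gap j k ltac:(lia)).
  assert (Hk : fan_slope k = INR k * fan_step) by reflexivity.
  unfold line_potential, neg_line, fan_offset; cbn [fst snd].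
  replace (- fan_slope j * x - (- fan_slope j) ^ 2 * 0 / 2
           + fan_slope j * (fan_slope j + 2 * fan_step) * RR / 2
           - (- fan_slope k * x - (- fan_slope k) ^ 2 * 0 / 2
              + fan_slope k * (fan_slope k + 2 * fan_step) * RR / 2))
    with ((fan_slope j - fan_slope k) * ((fan_slope j + fan_slope k + 2 * fan_step) * RR / 2 - x))
    by field.
  assert ((fan_slope j + fan_slope k + 2 * fan_step) * RR / 2 - x >= RR * fan_step / 4) by nra.
  apply Rle_trans with (fan_step * (RR * fan_step / 4)); [right; field|].
  assert (0 <= RR * fan_step) by (apply Rmult_le_pos; lra).
  apply Rmult_le_compat; lra.
Qed.

Lemma barrier_terminal_ge_zone k x : (1 <= k <= n - 1)%nat ->
  (INR k + 1 / 4) * RR * fan_step <= x <= (INR k + 5 / 4) * RR * fan_step ->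
  INR (2 * n + 1) * (2 * fan_tail) <= fan_step / 4 -> - x / RR <= hopf_cole nu fan_lines 0 x.
Proof.
  intros Hk Hx Hc. assert (Hq := fan_step_pos).
  assert (HL := hopf_cole_ge nu Hnu fan_lines (neg_line k) 0 x (neg_line_in k ltac:(lia))).
  assert (Hs : lsum fan_lines (fun l => Rmax 0 (fst (neg_line k) - fst l)
                                        * rel_weight nu l (neg_line k) 0 x)
               <= INR (length fan_lines) * (2 * fan_tail)).
  { apply lsum_le_length. intros l Hl.
    assert (HK := fan_slope_range k ltac:(lia)). assert (Htail : 0 < fan_tail) by apply exp_pos.
    destruct (fan_lines_in l Hl) as [[j [Hj ->]]|[j [Hj ->]]];
      rewrite ?fst_neg_line, ?fst_pos_line.
    - destruct (Compare_dec.le_lt_dec j k) as [Hjk|Hjk].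
      + assert (fan_slope j <= fan_slope k)
          by (unfold fan_slope; apply Rmult_le_compat_r; [lra|apply le_INR; auto]).
        rewrite Rmax_left, Rmult_0_l by lra. lra.
      + assert (HJ := fan_slope_range j Hj). assert (Hgap := fan_slope_gap j k Hjk).
        rewrite Rmax_right by lra.
        apply Rmult_le_compat; [lra|left; apply exp_pos|lra|].
        apply exp_neg_le, neg_line_gap_terminal; [lia|lra].
    - assert (HJ := fan_slope_range j ltac:(lia)).
      rewrite Rmax_left, Rmult_0_l by lra. lra. }
  rewrite fan_lines_length in Hs. rewrite fst_neg_line in HL, Hs.
  assert (Hkq : fan_slope k = INR k * fan_step) by reflexivity.
  assert (- x / RR <= - fan_slope k - fan_step / 4).
  { apply Rmult_le_reg_r with RR; auto. unfold Rdiv.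
    replace (- x * / RR * RR) with (- x) by (field; lra). nra. }
  lra.
Qed.

Lemma barrier_terminal_ge x : 0 <= x <= RR ->
  INR (2 * n + 1) * (1 / (2 * nu)) * fan_tail <= 1 / RR ->
  INR (2 * n + 1) * (2 * fan_tail) <= fan_step / 4 -> - x / RR <= hopf_cole nu fan_lines 0 x.
Proof.
  intros Hx Hc1 Hc2. assert (Hq0 := fan_step_pos).
  destruct (Rle_dec x (5 * RR * fan_step / 4)) as [Hs|Hs];
    [apply barrier_terminal_ge_near_0; auto; lra|].
  apply Rnot_le_lt in Hs.
  set (z := x / (RR * fan_step) - 1 / 4).
  assert (HRq : 0 < RR * fan_step) by (apply Rmult_lt_0_compat; lra).
  assert (Ex : x = (z + 1 / 4) * RR * fan_step) by (unfold z; field; lra).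
  assert (Hz1 : 1 <= z) by nra.
  destruct (nfloor_ex z ltac:(lra)) as [k [Hk1 Hk2]].
  assert (Hnq : INR n * fan_step = 1) by (unfold fan_step; field; assert (H := INR_n_ge_2); lra).
  assert (Hzn : z < INR n) by nra.
  assert (Hk1' : (1 <= k)%nat) by (destruct k; [simpl in Hk2; lra|lia]).
  assert (Hkn : (k <= n - 1)%nat) by (assert (INR k < INR n) by lra; apply INR_lt in H; lia).
  apply (barrier_terminal_ge_zone k); auto.
  rewrite Ex. split; apply Rmult_le_compat_r; try lra; apply Rmult_le_compat_r; lra.
Qed.

End Barrier.

Lemma classical_solution_reflect T nu a th dt dx dxx :
  classical_solution T nu a th dt dx dxx ->
  classical_solution T nu a (fun t x => - th t (- x)) (fun t x => - dt t (- x))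
    (fun t x => dx t (- x)) (fun t x => - dxx t (- x)).
Proof.
  intros [Hc Hct Hcx Hcxx Hdt Hdx Hdxx Hpde]. split.
  - intros t x. apply continuity_2d_pt_opp.
    apply (continuity_2d_pt_neg_x (fun t x => th (clamp 0 T t) x)). auto.
  - intros t x Ht. apply continuity_2d_pt_opp, (continuity_2d_pt_neg_x dt), Hct, Ht.
  - intros t x Ht. apply (continuity_2d_pt_neg_x dx), Hcx, Ht.
  - intros t x Ht. apply continuity_2d_pt_opp, (continuity_2d_pt_neg_x dxx), Hcxx, Ht.
  - intros t x Ht. apply D_opp, Hdt, Ht.
  - intros t x Ht. eapply D_val; [|apply D_opp, D_neg_arg, Hdx, Ht]. ring.
  - intros t x Ht. apply D_neg_arg, Hdxx, Ht.
  - intros t x Ht. specialize (Hpde t (- x) Ht). lra.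
Qed.

Section TerminalData.
Variables (T kappa delta : R) (eta : R -> R).
Hypothesis HT : 0 < T.
Hypothesis Hdelta : 0 < delta < T.
Hypothesis Heta : cont_on_interval eta 0 T.

Definition r_delta := r_ext T kappa eta delta.

Lemma r_delta_pos : 0 < r_delta.
Proof. unfold r_delta. rewrite <- (r_ext_T T kappa eta). apply r_ext_decreasing; auto; lra. Qed.

Lemma r_fun_delta : r_fun T kappa eta delta = r_delta.
Proof. apply r_fun_eq; auto; lra. Qed.

Lemma g_fun_odd x : g_fun T kappa delta eta (- x) = - g_fun T kappa delta eta x.
Proof.
  unfold g_fun. rewrite Rabs_Ropp, r_fun_delta. assert (H := r_delta_pos).
  destruct (Rle_dec (Rabs x) r_delta) as [|Hx]; [field; lra|].
  destruct (Rlt_dec 0 (- x)); destruct (Rlt_dec 0 x); try lra.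
  exfalso. assert (x = 0) by lra. subst. rewrite Rabs_R0 in Hx. lra.
Qed.

Lemma Rabs_g_fun_le_1 x : Rabs (g_fun T kappa delta eta x) <= 1.
Proof.
  unfold g_fun. rewrite r_fun_delta. assert (H := r_delta_pos).
  destruct (Rle_dec (Rabs x) r_delta).
  - unfold Rdiv. rewrite Rabs_mult, Rabs_Ropp, (Rabs_pos_eq (/ r_delta))
      by (left; apply Rinv_0_lt_compat; lra).
    apply Rmult_le_reg_r with r_delta; auto. rewrite Rmult_assoc, Rinv_l by lra. lra.
  - destruct Rlt_dec; unfold Rabs; destruct Rcase_abs; lra.
Qed.

(** The barrier is bigger than [g] on [x >= 0] as soon as the viscosity is
    small compared with the resolution [1 / n] of the fan. *)
Definition viscosity_resolves_fan nu n :=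
  INR (2 * n + 1) * (1 / (2 * nu)) * fan_tail nu r_delta n <= 1 / r_delta /\
  INR (2 * n + 1) * (2 * fan_tail nu r_delta n) <= fan_step n / 4.

Definition barrier nu n t x := hopf_cole nu (fan_lines r_delta n) (r_ext T kappa eta t) x.

Lemma g_fun_le_barrier nu n x : 0 < nu -> (2 <= n)%nat -> viscosity_resolves_fan nu n ->
  0 <= x -> g_fun T kappa delta eta x <= barrier nu n T x.
Proof.
  intros Hnu Hn [H1 H2] Hx. unfold barrier. rewrite r_ext_T.
  unfold g_fun. rewrite r_fun_delta. assert (HR := r_delta_pos).
  destruct (Rle_dec (Rabs x) r_delta) as [Hy|Hy].
  - rewrite Rabs_pos_eq in Hy by lra. apply barrier_terminal_ge; auto.
  - assert (Hb := Rabs_hopf_cole_le_1 nu (fan_lines r_delta n) 0 x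
                    (fan_lines_nonnil r_delta n Hn) (fan_lines_slope r_delta n Hn)).
    apply Rabs_le_between in Hb.
    destruct Rlt_dec; [lra|]. rewrite Rabs_pos_eq in Hy by lra. lra.
Qed.

Lemma barrier_at_0 nu n t : 0 < nu -> (2 <= n)%nat -> barrier nu n t 0 = 0.
Proof. intros; unfold barrier; apply hopf_cole_fan_at_0; auto. Qed.

End TerminalData.

Section ViscousSolution.
Variables (T kappa delta : R) (eta : R -> R) (nu B : R) (th dt dx dxx : R -> R -> R).
Hypothesis HT : 0 < T.
Hypothesis Hdelta : 0 < delta < T.
Hypothesis Heta : cont_on_interval eta 0 T.
Hypothesis Hnu : 0 < nu.
Hypothesis Hsol : classical_solution T nu (coef_a T kappa eta) th dt dx dxx.
Hypothesis Hth : forall t x, 0 <= t <= T -> Rabs (th t x) <= B.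
Hypothesis Hterm : forall x, th T x = g_fun T kappa delta eta x.

Lemma solution_odd t x : 0 <= t <= T -> th t (- x) = - th t x.
Proof.
  intros Ht. destruct (coef_a_bounded T kappa eta HT Heta) as [A HA].
  assert (E := uniqueness T A B nu (coef_a T kappa eta) th dt dx dxx
                 (fun t x => - th t (- x)) (fun t x => - dt t (- x))
                 (fun t x => dx t (- x)) (fun t x => - dxx t (- x))
                 HT ltac:(lra) HA (fun t _ => coef_a_continuous T kappa eta HT Heta t)
                 Hsol (classical_solution_reflect _ _ _ _ _ _ _ Hsol) Hth
                 ltac:(intros; cbv beta; rewrite Rabs_Ropp; auto)
                 ltac:(intros y; cbv beta; rewrite !Hterm, g_fun_odd; auto; ring)
                 t (- x) Ht).
  cbv beta in E. rewrite Ropp_involutive in E. exact E.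
Qed.

Lemma solution_le_1 t x : 0 <= t <= T -> th t x <= 1.
Proof.
  destruct (coef_a_bounded T kappa eta HT Heta) as [A HA].
  apply (comparison T A (Rmax B 1) 0 nu (coef_a T kappa eta) th dt dx dxx (fun _ _ => 1)
           (fun _ _ => 0) (fun _ _ => 0) (fun _ _ => 0)); auto; try lra.
  - intros; eapply Rle_trans; [apply Hth; auto|apply Rmax_l].
  - intros; rewrite Rabs_R1; apply Rmax_r.
  - intros; apply continuity_2d_pt_const.
  - intros; apply D_const.
  - intros; apply D_const.
  - intros; apply D_const.
  - intros; lra.
  - intros; lra.
  - intros y. rewrite Hterm. assert (Hg := Rabs_g_fun_le_1 T kappa delta eta HT Hdelta Heta y).
    apply Rabs_le_between in Hg. lra.
Qed.

Lemma solution_ge_m1 t x : 0 <= t <= T -> -1 <= th t x.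
Proof. intros Ht. assert (H := solution_le_1 t (- x) Ht). rewrite solution_odd in H; lra. Qed.

Lemma solution_at_0 t : 0 <= t <= T -> th t 0 = 0.
Proof. intros Ht. assert (H := solution_odd t 0 Ht). rewrite Ropp_0 in H. lra. Qed.

Lemma barrier_continuous n : (2 <= n)%nat ->
  forall t x, continuity_2d_pt (fun t x => barrier T kappa delta eta nu n (clamp 0 T t) x) t x.
Proof.
  intros Hn. set (L := fan_lines (r_delta T kappa delta eta) n).
  apply (continuity_2d_pt_lipschitz_x _
           (fun t x => hopf_cole_x nu L (r_ext T kappa eta (clamp 0 T t)) x) (1 / (2 * nu))).
  - intros t x. apply hopf_cole_dx; auto. apply fan_lines_nonnil, Hn.
  - intros t x. apply Rabs_le, hopf_cole_x_bounds; auto.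
    + apply fan_lines_nonnil, Hn.
    + apply fan_lines_slope, Hn.
  - intros t x. apply (continuity_pt_comp (fun t => r_ext T kappa eta (clamp 0 T t))
                         (fun s => hopf_cole nu L s x)).
    + apply (continuity_pt_comp (clamp 0 T) (r_ext T kappa eta)).
      * apply continuity_pt_clamp. lra.
      * apply r_ext_continuous; auto.
    + eapply C_of_D, hopf_cole_ds; auto. apply fan_lines_nonnil, Hn.
Qed.

Lemma solution_le_barrier n : (2 <= n)%nat -> viscosity_resolves_fan T kappa delta eta nu n ->
  forall t x, 0 <= t <= T -> 0 <= x -> th t x <= barrier T kappa delta eta nu n t x.
Proof.
  intros Hn Hres.
  destruct (coef_a_bounded T kappa eta HT Heta) as [A HA].
  set (L := fan_lines (r_delta T kappa delta eta) n).
  assert (HL : L <> nil) by apply (fan_lines_nonnil _ n Hn).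
  assert (HLs : forall l, In l L -> -1 <= fst l <= 1) by apply (fan_lines_slope _ n Hn).
  set (r := r_ext T kappa eta). set (a := coef_a T kappa eta).
  apply (comparison_half T A (Rmax B 1) (1 / (2 * nu)) nu a th dt dx dxx
           (barrier T kappa delta eta nu n)
           (fun t x => hopf_cole_s nu L (r t) x * (- a t))
           (fun t x => hopf_cole_x nu L (r t) x)
           (fun t x => hopf_cole_xx nu L (r t) x)); auto; try lra.
  - left; apply Rdiv_lt_0_compat; lra.
  - intros; eapply Rle_trans; [apply Hth; auto|apply Rmax_l].
  - intros; eapply Rle_trans; [apply Rabs_hopf_cole_le_1; auto|apply Rmax_r].
  - apply barrier_continuous, Hn.
  - intros t x Ht. apply (derivable_pt_lim_comp r (fun s => hopf_cole nu L s x)).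
    + apply r_ext_dt; auto.
    + apply hopf_cole_ds; auto.
  - intros t x Ht. apply hopf_cole_dx; auto.
  - intros t x Ht. apply hopf_cole_x_dx; auto.
  - intros t x Ht. unfold barrier. fold L r.
    assert (P := hopf_cole_burgers nu Hnu L HL (r t) x).
    replace (hopf_cole_s nu L (r t) x * - a t
             - a t * hopf_cole nu L (r t) x * hopf_cole_x nu L (r t) x
             + nu * a t * hopf_cole_xx nu L (r t) x)
      with (- a t * (hopf_cole_s nu L (r t) x + hopf_cole nu L (r t) x * hopf_cole_x nu L (r t) x
                     - nu * hopf_cole_xx nu L (r t) x)) by ring.
    rewrite P. lra.
  - intros t x Ht. destruct (hopf_cole_x_bounds nu Hnu L (r t) x HL HLs). lra.
  - intros y Hy. rewrite Hterm. apply g_fun_le_barrier; auto.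
  - intros t Ht. rewrite solution_at_0, barrier_at_0; auto; lra.
Qed.

End ViscousSolution.

(** * Convergence away from the fan *)

(** [exp (- c / (2 nu))] vanishes faster than any power of [nu]; [y^2 / 4 <= exp y]
    gives the explicit threshold. *)
Lemma exp_small_viscosity c K tau : 0 < c -> 0 <= K -> 0 < tau -> exists nu0, 0 < nu0 <= 1 /\
  forall nu, 0 < nu < nu0 ->
    K * (1 / nu) * exp (- c / (2 * nu)) <= tau /\ K * exp (- c / (2 * nu)) <= tau.
Proof.
  intros Hc HK Ht.
  set (nu0 := Rmin 1 (tau * c ^ 2 / (16 * K + 1))).
  assert (Hc2 : 0 < c ^ 2) by (apply pow_lt; lra).
  assert (Hn0 : 0 < nu0)
    by (unfold nu0; apply Rmin_pos; [lra|apply Rdiv_lt_0_compat; [apply Rmult_lt_0_compat|]; lra]).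
  exists nu0. split; [split; [exact Hn0|apply Rmin_l]|].
  intros nu Hnu.
  assert (Hn1 : nu < 1) by (assert (nu0 <= 1) by apply Rmin_l; lra).
  assert (Hn2 : nu * (16 * K + 1) < tau * c ^ 2).
  { assert (nu0 <= tau * c ^ 2 / (16 * K + 1)) by apply Rmin_r.
    apply Rmult_lt_reg_r with (/ (16 * K + 1)); [apply Rinv_0_lt_compat; lra|].
    rewrite Rmult_assoc, Rinv_r by lra. unfold Rdiv in H. lra. }
  set (y := c / (2 * nu)).
  assert (Hy : 0 < y) by (unfold y; apply Rdiv_lt_0_compat; lra).
  assert (Hey : y ^ 2 / 4 <= exp y).
  { replace y with (y / 2 + y / 2) at 2 by field. rewrite exp_plus.
    assert (1 + y / 2 <= exp (y / 2)) by (left; apply exp_ineq1; lra).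
    nra. }
  assert (Hexp : exp (- c / (2 * nu)) <= 16 * nu ^ 2 / c ^ 2).
  { replace (- c / (2 * nu)) with (- y) by (unfold y; field; lra). rewrite exp_Ropp.
    apply Rle_trans with (/ (y ^ 2 / 4)).
    - apply Rinv_le_contravar; [apply Rdiv_lt_0_compat; [apply pow_lt|]; lra|exact Hey].
    - right. unfold y. field. split; lra. }
  assert (He0 := exp_pos (- c / (2 * nu))).
  assert (K1 : K * (1 / nu) * exp (- c / (2 * nu)) <= 16 * K * nu / c ^ 2).
  { apply Rle_trans with (K * (1 / nu) * (16 * nu ^ 2 / c ^ 2)).
    - apply Rmult_le_compat_l; [apply Rmult_le_pos; [lra|left; apply Rdiv_lt_0_compat; lra]|lra].
    - right. field. split; lra. }
  assert (K2 : 16 * K * nu / c ^ 2 <= tau).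
  { apply Rmult_le_reg_r with (c ^ 2); [lra|].
    unfold Rdiv. rewrite Rmult_assoc, Rinv_l by lra. nra. }
  assert (K * exp (- c / (2 * nu)) <= K * (1 / nu) * exp (- c / (2 * nu))).
  { rewrite Rmult_assoc. apply Rmult_le_compat_l; [lra|].
    rewrite <- (Rmult_1_l (exp _)) at 1. apply Rmult_le_compat_r; [lra|].
    unfold Rdiv. rewrite Rmult_1_l, <- Rinv_1. apply Rinv_le_contravar; lra. }
  lra.
Qed.

Lemma fan_resolution_exists RR mu : 0 < RR -> 0 < mu ->
  exists n, (2 <= n)%nat /\ RR * fan_step n <= mu.
Proof.
  intros HR Hmu.
  destruct (nfloor_ex (RR / mu)) as [k [Hk1 Hk2]]; [left; apply Rdiv_lt_0_compat; lra|].
  exists (k + 2)%nat. split; [lia|].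
  assert (HINn : INR (k + 2) = INR k + 2) by (rewrite plus_INR; simpl; ring).
  assert (Hp : 0 < INR k + 2) by (assert (0 <= INR k) by apply pos_INR; lra).
  unfold fan_step. rewrite HINn.
  apply Rmult_le_reg_r with (INR k + 2); [exact Hp|]. rewrite Rmult_assoc, Rinv_l, Rmult_1_r by lra.
  replace RR with (mu * (RR / mu)) at 1 by (field; lra).
  apply Rmult_le_compat_l; lra.
Qed.

Lemma entropy_outside_fan T kappa delta eta psi t x : 0 < delta ->
  admissible T kappa delta eta psi -> 0 <= t <= T -> psi t <= Rabs x ->
  theta_entropy T kappa delta eta t x = msign x.
Proof.
  intros Hd [_ [_ [_ [a0 [Ha0d Hpa]]]]] Ht Hx. unfold theta_entropy.
  destruct (Rle_dec t delta) as [|Htd]; auto.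
  destruct (Rle_dec (r_fun T kappa eta delta - r_fun T kappa eta t) (Rabs x)) as [|Hn]; auto.
  exfalso. assert (H := Hpa t ltac:(lra) ltac:(lra)).
  assert (Rmax (r_fun T kappa eta delta - r_fun T kappa eta t) 0
          >= r_fun T kappa eta delta - r_fun T kappa eta t) by (apply Rle_ge, Rmax_l).
  lra.
Qed.

Lemma cont_on2_clamp f T : 0 <= T -> cont_on2 f (fun t _ => 0 <= t <= T) ->
  forall t x, continuity_2d_pt (fun t x => f (clamp 0 T t) x) t x.
Proof.
  intros HT Hf t x eps.
  destruct (Hf (clamp 0 T t) x (clamp_in 0 T t HT) eps (cond_pos eps)) as [d [Hd Hdd]].
  exists (mkposreal d Hd). intros u v Hu Hv. simpl in *.
  apply Hdd; [apply clamp_in; auto| |exact Hv].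
  eapply Rle_lt_trans; [apply clamp_lipschitz; auto|exact Hu].
Qed.

Lemma cont_on2_interior f T t x : cont_on2 f (fun t _ => 0 <= t < T) -> 0 < t < T ->
  continuity_2d_pt f t x.
Proof.
  intros Hf Ht eps.
  destruct (Hf t x ltac:(lra) eps (cond_pos eps)) as [d [Hd Hdd]].
  assert (Hm : 0 < Rmin d (Rmin t (T - t))) by (repeat apply Rmin_pos; lra).
  exists (mkposreal _ Hm). intros u v Hu Hv. simpl in *.
  assert (Rmin d (Rmin t (T - t)) <= d /\ Rmin d (Rmin t (T - t)) <= t /\
          Rmin d (Rmin t (T - t)) <= T - t) as [H1 [H2 H3]]
    by (unfold Rmin; repeat destruct Rle_dec; lra).
  apply Rabs_def2 in Hu. apply Hdd; try lra. apply Rabs_def1; lra.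
Qed.

Lemma Rabs_sub_msign_le (f : R -> R) c eps x : 0 < c ->
  (forall y, f (- y) = - f y) -> (forall y, c <= y -> -1 <= f y <= -1 + eps) ->
  c <= Rabs x -> Rabs (f x - msign x) <= eps.
Proof.
  intros Hc Hodd Hf Hx. unfold msign. apply Rabs_le.
  destruct (Rlt_dec 0 x) as [Hxp|Hxn].
  - rewrite Rabs_pos_eq in Hx by lra. specialize (Hf x Hx). lra.
  - destruct (Rlt_dec x 0) as [Hxn'|Hx0].
    + rewrite Rabs_left in Hx by lra. specialize (Hf (- x) Hx). rewrite Hodd in Hf. lra.
    + replace x with 0 in Hx by lra. rewrite Rabs_R0 in Hx. lra.
Qed.

Lemma bounded_classical_solution_unpack T kappa delta eta s0 th :
  0 < T -> cont_on_interval eta 0 T ->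
  is_bounded_classical_solution T kappa delta eta s0 th ->
  exists B dt dx dxx,
    (forall t x, 0 <= t <= T -> Rabs (th t x) <= B) /\
    classical_solution T (/ 2 * s0 ^ 2) (coef_a T kappa eta) th dt dx dxx /\
    (forall x, th T x = g_fun T kappa delta eta x).
Proof.
  intros HT Heta [[M HM] [Hc [[dt [dx [dxx [C1 [C2 [C3 [D1 [D2 [D3 P]]]]]]]]] Hg]]].
  exists M, dt, dx, dxx. split; [exact HM|split; [|exact Hg]]. split.
  - apply cont_on2_clamp; [lra|exact Hc].
  - intros; apply cont_on2_interior with T; auto.
  - intros; apply cont_on2_interior with T; auto.
  - intros; apply cont_on2_interior with T; auto.
  - exact D1.
  - intros; apply D2; lra.
  - intros; apply D3; lra.
  - intros t x Ht. rewrite <- (coef_a_eq T kappa eta HT Heta t) by lra. apply P; lra.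
Qed.

Section MainEstimate.
Variables (T kappa delta : R) (eta psi : R -> R).
Hypothesis HT : 0 < T.
Hypothesis Hdelta : 0 < delta < T.
Hypothesis Heta : cont_on_interval eta 0 T.
Hypothesis Hpsi : admissible T kappa delta eta psi.

Let RR := r_delta T kappa delta eta.

Lemma admissible_margin : exists b m0, 0 < b < delta /\ 0 < m0 /\
  forall t, b <= t <= T -> Rmax (RR - r_ext T kappa eta t) 0 + m0 <= psi t.
Proof.
  destruct Hpsi as [Hpc [_ [_ [a0 [Ha0d Hpa]]]]].
  set (r := r_ext T kappa eta).
  assert (Hreq : forall t, 0 <= t <= T -> r_fun T kappa eta t = r t)
    by (intros; apply r_fun_eq; auto).
  assert (Hmax0 : forall y, Rmax y 0 = (y + Rabs y) / 2)
    by (intros y; unfold Rmax, Rabs; destruct Rle_dec; destruct Rcase_abs; lra).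
  set (b := (Rmax a0 0 + delta) / 2).
  assert (a0 <= Rmax a0 0 /\ 0 <= Rmax a0 0 /\ Rmax a0 0 < delta) as [Hm1 [Hm2 Hm3]]
    by (unfold Rmax; destruct Rle_dec; lra).
  set (F t := psi (clamp 0 T t) - ((RR - r t) + Rabs (RR - r t)) / 2).
  assert (HFc : forall t, continuity_pt F t).
  { intros t. unfold F. apply C_minus; [apply cont_on_interval_clamp; auto|].
    apply (continuity_pt_ext (fun t => / 2 * ((RR - r t) + Rabs (RR - r t)))); [intros; field|].
    assert (Hr : continuity_pt (fun t => RR - r t) t)
      by (apply C_minus; [apply C_const|apply r_ext_continuous; auto]).
    apply C_scal, C_plus; [exact Hr|].
    apply (continuity_pt_comp (fun t => RR - r t) Rabs); [exact Hr|apply Rcontinuity_abs]. }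
  destruct (continuity_ab_min F b T ltac:(unfold b; lra) (fun c _ => HFc c)) as [tm [Htm1 Htm2]].
  exists b, (F tm). split; [unfold b; lra|split].
  - unfold F. rewrite clamp_id by (unfold b in *; lra).
    assert (H := Hpa tm ltac:(unfold b in *; lra) ltac:(unfold b in *; lra)).
    rewrite !Hreq, Hmax0 in H by (unfold b in *; lra).
    unfold RR, r_delta. fold r. lra.
  - intros t Ht. assert (H := Htm1 t Ht). unfold F in *.
    rewrite (clamp_id 0 T t) in H by (unfold b in *; lra).
    rewrite Hmax0. lra.
Qed.

Lemma barrier_le_m1 nu n b m0 gam t y : 0 < nu -> (2 <= n)%nat -> 0 < m0 -> 0 < gam ->
  RR * fan_step n <= m0 / 2 -> RR * fan_step n <= gam / 4 -> RR + gam <= r_ext T kappa eta b ->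
  0 <= t <= T -> 0 <= y -> (b <= t -> Rmax (RR - r_ext T kappa eta t) 0 + m0 <= y) ->
  barrier T kappa delta eta nu n t y <=
    -1 + INR (2 * n + 1) * (2 * (exp (- (fan_step n * m0 / 2) / (2 * nu))
                                 + exp (- (fan_step n * gam / 4) / (2 * nu)) + exp (- y / nu))).
Proof.
  intros Hnu Hn Hm0 Hgam Hq1 Hq2 Hb Ht Hy Hout.
  assert (HR : 0 < RR) by (apply r_delta_pos; auto).
  assert (HN : 0 <= INR (2 * n + 1)) by apply pos_INR.
  assert (E1 := exp_pos (- (fan_step n * m0 / 2) / (2 * nu))).
  assert (E2 := exp_pos (- (fan_step n * gam / 4) / (2 * nu))).
  assert (E3 := exp_pos (- y / nu)).
  unfold barrier. fold RR.
  destruct (Rle_dec b t) as [Htb|Htb].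
  - eapply Rle_trans; [apply (barrier_le_outside_fan nu RR n Hnu HR Hn m0); auto|]. nra.
  - eapply Rle_trans; [apply (barrier_le_before_fan nu RR n Hnu Hn gam); auto|].
    + assert (r_ext T kappa eta b <= r_ext T kappa eta t)
        by (apply r_ext_nonincreasing; auto; lra).
      lra.
    + nra.
Qed.

Lemma fan_parameters : exists b m0 gam n,
  0 < b < delta /\ 0 < m0 /\ 0 < gam /\ RR + gam <= r_ext T kappa eta b /\ (2 <= n)%nat /\
  RR * fan_step n <= m0 / 2 /\ RR * fan_step n <= gam / 4 /\
  forall t, b <= t <= T -> Rmax (RR - r_ext T kappa eta t) 0 + m0 <= psi t.
Proof.
  assert (HR : 0 < RR) by (apply r_delta_pos; auto).
  destruct admissible_margin as [b [m0 [Hb [Hm0 Hmargin]]]].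
  set (gam := r_ext T kappa eta b - RR).
  assert (Hgam : 0 < gam).
  { unfold gam, RR, r_delta. assert (H := r_ext_decreasing T kappa eta HT Heta b delta). lra. }
  destruct (fan_resolution_exists RR (Rmin (m0 / 2) (gam / 4)) HR) as [n [Hn Hstep]];
    [apply Rmin_pos; lra|].
  exists b, m0, gam, n. repeat split; auto; try lra.
  - unfold gam. lra.
  - eapply Rle_trans; [exact Hstep|apply Rmin_l].
  - eapply Rle_trans; [exact Hstep|apply Rmin_r].
Qed.

Lemma small_viscosity_threshold n m0 gam eps : (2 <= n)%nat -> 0 < m0 -> 0 < gam -> 0 < eps ->
  exists nu0, 0 < nu0 /\ forall nu, 0 < nu < nu0 ->
    viscosity_resolves_fan T kappa delta eta nu n /\
    INR (2 * n + 1) * (2 * exp (- (fan_step n * m0 / 2) / (2 * nu))) <= eps / 3 /\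
    INR (2 * n + 1) * (2 * exp (- (fan_step n * gam / 4) / (2 * nu))) <= eps / 3.
Proof.
  intros Hn Hm0 Hgam Heps.
  assert (HR : 0 < RR) by (apply r_delta_pos; auto).
  assert (Hq : 0 < fan_step n) by (apply fan_step_pos, Hn).
  set (N := INR (2 * n + 1)).
  assert (HN : 0 < N) by (unfold N; apply lt_0_INR; lia).
  assert (Hc : 0 < RR * fan_step n ^ 2 / 4)
    by (apply Rdiv_lt_0_compat; [apply Rmult_lt_0_compat; [|apply pow_lt]|]; lra).
  destruct (exp_small_viscosity _ (N / 2) (1 / RR) Hc ltac:(lra)
              ltac:(apply Rdiv_lt_0_compat; lra)) as [nu1 [Hnu1 Hs1]].
  destruct (exp_small_viscosity _ (2 * N) (fan_step n / 4) Hc ltac:(lra) ltac:(lra))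
    as [nu2 [Hnu2 Hs2]].
  destruct (exp_small_viscosity (fan_step n * m0 / 2) (2 * N) (eps / 3)
              ltac:(apply Rdiv_lt_0_compat; [apply Rmult_lt_0_compat|]; lra) ltac:(lra) ltac:(lra))
    as [nu3 [Hnu3 Hs3]].
  destruct (exp_small_viscosity (fan_step n * gam / 4) (2 * N) (eps / 3)
              ltac:(apply Rdiv_lt_0_compat; [apply Rmult_lt_0_compat|]; lra) ltac:(lra) ltac:(lra))
    as [nu4 [Hnu4 Hs4]].
  exists (Rmin (Rmin nu1 nu2) (Rmin nu3 nu4)). split; [repeat apply Rmin_pos; lra|].
  intros nu Hnu.
  assert (nu < nu1 /\ nu < nu2 /\ nu < nu3 /\ nu < nu4) as [H1 [H2 [H3 H4]]]
    by (unfold Rmin in Hnu; repeat destruct Rle_dec; lra).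
  destruct (Hs1 nu ltac:(lra)) as [Hs1' _]. destruct (Hs2 nu ltac:(lra)) as [_ Hs2'].
  destruct (Hs3 nu ltac:(lra)) as [_ Hs3']. destruct (Hs4 nu ltac:(lra)) as [_ Hs4'].
  split; [split|split; fold N; lra].
  - eapply Rle_trans; [|exact Hs1']. right. unfold fan_tail, N, RR. field. lra.
  - eapply Rle_trans; [|exact Hs2']. right. unfold fan_tail, N, RR. ring.
Qed.

(** Beyond [2 nu L0] from the fan, the contribution of the line of slope [+1] to
    the barrier is at most [exp (- 2 L0) <= 1 / (2 L0)]. *)
Lemma exp_far_le N nu eps y : 0 < N -> 0 < nu -> 0 < eps -> 2 * nu * (3 * N / eps) <= y ->
  N * (2 * exp (- y / nu)) <= eps / 3.
Proof.
  intros HN Hnu Heps Hy.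
  assert (Hyn0 : 0 < 6 * N / eps) by (apply Rdiv_lt_0_compat; lra).
  assert (Hyn : 6 * N / eps <= y / nu).
  { apply Rmult_le_reg_r with nu; [lra|].
    unfold Rdiv at 2. rewrite Rmult_assoc, Rinv_l, Rmult_1_r by lra.
    replace (6 * N / eps * nu) with (2 * nu * (3 * N / eps)) by (field; lra). lra. }
  assert (Hexp : 1 + y / nu < exp (y / nu))
    by (apply exp_ineq1, Rgt_not_eq, Rlt_gt; eapply Rlt_le_trans; [exact Hyn0|exact Hyn]).
  replace (- y / nu) with (- (y / nu)) by (field; lra). rewrite exp_Ropp.
  apply Rle_trans with (N * (2 * / (6 * N / eps))).
  - apply Rmult_le_compat_l; [lra|]. apply Rmult_le_compat_l; [lra|].
    apply Rinv_le_contravar; lra.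
  - right. field. lra.
Qed.

Lemma solution_close_to_m1 eps : 0 < eps -> exists nu0 L0, 0 < nu0 /\
  forall nu B th dt dx dxx, 0 < nu < nu0 ->
    classical_solution T nu (coef_a T kappa eta) th dt dx dxx ->
    (forall t x, 0 <= t <= T -> Rabs (th t x) <= B) ->
    (forall x, th T x = g_fun T kappa delta eta x) ->
    forall t y, 0 <= t <= T -> 2 * nu * L0 + psi t <= y -> th t y <= -1 + eps.
Proof.
  intros Heps.
  destruct fan_parameters as [b [m0 [gam [n [Hb [Hm0 [Hgam [Hbgam [Hn [Hq1 [Hq2 Hmargin]]]]]]]]]]].
  destruct (small_viscosity_threshold n m0 gam eps Hn Hm0 Hgam Heps) as [nu0 [Hnu0 Hsmall]].
  set (N := INR (2 * n + 1)).
  assert (HN : 0 < N) by (unfold N; apply lt_0_INR; lia).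
  exists nu0, (3 * N / eps). split; [exact Hnu0|].
  intros nu B th dt dx dxx Hnu Hsol Hth Hterm t y Ht Hy.
  destruct (Hsmall nu Hnu) as [Hres [Hs1 Hs2]].
  assert (Hpsi0 : 0 <= psi t) by (apply Hpsi; exact Ht).
  assert (HL0 : 0 < 2 * nu * (3 * N / eps))
    by (apply Rmult_lt_0_compat; [lra|apply Rdiv_lt_0_compat; lra]).
  assert (Hfar := exp_far_le N nu eps y HN ltac:(lra) Heps ltac:(lra)).
  eapply Rle_trans; [apply (solution_le_barrier T kappa delta eta nu B th dt dx dxx) with (n := n);
                     auto; lra|].
  eapply Rle_trans; [apply (barrier_le_m1 nu n b m0 gam); auto; try lra|].
  - intros Htb. assert (Hm := Hmargin t ltac:(lra)). lra.
  - fold N in Hs1, Hs2 |- *. lra.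
Qed.

End MainEstimate.

Theorem mainTheorem6
  (T kappa delta : R) (HT : 0 < T) (Hdelta : 0 < delta < T)
  (eta : R -> R) (Heta : is_eta T kappa eta)
  (thetas : R -> R -> R -> R)
  (Hthetas : forall s0, 0 < s0 < 1 ->
     is_bounded_classical_solution T kappa delta eta s0 (thetas s0))
  (psi : R -> R) (Hpsi : admissible T kappa delta eta psi)
  (L : R -> R) (HLpos : forall s, 0 < s -> 0 < L s)
  (HLlim : forall M, exists d, 0 < d /\ forall s, 0 < s < d -> M < L s) :
  forall eps, 0 < eps -> exists d, 0 < d /\
    forall s0, 0 < s0 < 1 -> s0 < d ->
      forall t x, 0 <= t <= T -> s0 ^ 2 * L s0 + psi t <= Rabs x ->
        Rabs (thetas s0 t x - theta_entropy T kappa delta eta t x) <= eps.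
Proof.
  intros eps Heps.
  assert (Hcont : cont_on_interval eta 0 T) by apply Heta.
  destruct (solution_close_to_m1 T kappa delta eta psi HT Hdelta Hcont Hpsi eps Heps)
    as [nu0 [L0 [Hnu0 Hclose]]].
  destruct (HLlim L0) as [dL [HdL HLL0]].
  exists (Rmin nu0 dL). split; [apply Rmin_pos; lra|].
  intros s0 Hs0 Hs0d t x Ht Hx.
  assert (s0 < nu0 /\ s0 < dL) as [Hs0nu HsdL] by (unfold Rmin in Hs0d; destruct Rle_dec; lra).
  destruct (bounded_classical_solution_unpack T kappa delta eta s0 (thetas s0) HT Hcont
              (Hthetas s0 Hs0)) as [B [dt [dx [dxx [Hth [Hsol Hterm]]]]]].
  assert (Hs2 : 0 < s0 ^ 2) by (apply pow_lt; lra).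
  assert (Hnu : 0 < / 2 * s0 ^ 2 < nu0) by (split; simpl in *; nra).
  assert (Hc : 0 < s0 ^ 2 * L s0) by (apply Rmult_lt_0_compat; [lra|apply HLpos; lra]).
  assert (Hpsi0 : 0 <= psi t) by (apply Hpsi; exact Ht).
  rewrite (entropy_outside_fan T kappa delta eta psi) by (auto; lra).
  apply (Rabs_sub_msign_le (thetas s0 t) (s0 ^ 2 * L s0 + psi t)); auto; [lra| |].
  - intros y. apply (solution_odd T kappa delta eta (/ 2 * s0 ^ 2) B _ dt dx dxx); auto; lra.
  - intros y Hy. split.
    + apply (solution_ge_m1 T kappa delta eta (/ 2 * s0 ^ 2) B _ dt dx dxx); auto; lra.
    + apply (Hclose (/ 2 * s0 ^ 2) B _ dt dx dxx); auto.
      assert (s0 ^ 2 * L0 <= s0 ^ 2 * L s0)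
        by (apply Rmult_le_compat_l; [lra|left; apply HLL0; lra]).
      nra.
Qed.
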